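(* All framed hyperbolic $3$-manifolds $(\mathbb{H}^3/\Gamma,f)\in\mathcal{H}$ such that $\Omega(\Gamma)\ne\varnothing$ lie in the same path component of $\mathcal{H}$ (namely that of $(\mathbb{H}^3,\mathcal{O}_O)$).
   Context: A Kleinian group is a discrete torsion-free subgroup $\Gamma\le\mathrm{PSL}_2\mathbb{C}$; its limit set $\Lambda(\Gamma)$ is $\overline{\Gamma\cdot x}\cap S^2_\infty$ for any $x\in\mathbb{H}^3$, and $\Omega(\Gamma)=S^2_\infty\setminus\Lambda(\Gamma)$ is its domain of discontinuity. $\mathcal{H}$ is the set of framed hyperbolic $3$-manifolds $(M,f)$ ($f$ a positively oriented orthonormal frame) modulo frame-preserving orientation-preserving isometry, with the geometric topology, i.e. the Chabauty topology transported via the bijection $\Gamma\mapsto(\mathbb{H}^3/\Gamma,\pi_\Gamma(\mathcal{O}_O))$, where $\mathcal{O}_O$ is a fixed frame of $\mathbb{H}^3$ at a fixed point $O$ ($\Gamma_n\to\Gamma$ iff accumulation points of sequences $\psi_n\in\Gamma_n$ lie in $\Gamma$ and every element of $\Gamma$ is a limit of some $\psi_n\in\Gamma_n$). *)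

From Stdlib Require Import Reals.
From Coquelicot Require Import Coquelicot.
Open Scope R_scope.

(** A subgroup of PSL_2(C) is represented by its
    preimage in SL_2(C): a predicate on matrices closed under products,
    inverses, and A |-> -A. *)
Record M2 := mkM2 { ma : C; mb : C; mc : C; md : C }.

Definition mdet (A : M2) : C := Cminus (Cmult (ma A) (md A)) (Cmult (mb A) (mc A)).
Definition SL2 (A : M2) : Prop := mdet A = RtoC 1.

Definition mmul (A B : M2) : M2 :=
  mkM2 (Cplus (Cmult (ma A) (ma B)) (Cmult (mb A) (mc B)))
       (Cplus (Cmult (ma A) (mb B)) (Cmult (mb A) (md B)))
       (Cplus (Cmult (mc A) (ma B)) (Cmult (md A) (mc B)))
       (Cplus (Cmult (mc A) (mb B)) (Cmult (md A) (md B))).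
Definition mneg (A : M2) : M2 := mkM2 (Copp (ma A)) (Copp (mb A)) (Copp (mc A)) (Copp (md A)).
(* inverse of a determinant-one matrix *)
Definition minv (A : M2) : M2 := mkM2 (md A) (Copp (mb A)) (Copp (mc A)) (ma A).
Definition mid : M2 := mkM2 (RtoC 1) (RtoC 0) (RtoC 0) (RtoC 1).
Fixpoint mpow (A : M2) (n : nat) : M2 :=
  match n with O => mid | S k => mmul A (mpow A k) end.

Definition psl_is_id (A : M2) : Prop := A = mid \/ A = mneg mid.

Definition mnorm (A : M2) : R := Cmod (ma A) + Cmod (mb A) + Cmod (mc A) + Cmod (md A).
Definition msub (A B : M2) : M2 :=
  mkM2 (Cminus (ma A) (ma B)) (Cminus (mb A) (mb B)) (Cminus (mc A) (mc B)) (Cminus (md A) (md B)).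
Definition psl_dist (A B : M2) : R := Rmin (mnorm (msub A B)) (mnorm (msub A (mneg B))).

Definition psl_conv (u : nat -> M2) (A : M2) : Prop :=
  is_lim_seq (fun n => psl_dist (u n) A) 0.

Definition is_psl_subgroup (G : M2 -> Prop) : Prop :=
  (forall A, G A -> SL2 A) /\ G mid /\
  (forall A B, G A -> G B -> G (mmul A B)) /\
  (forall A, G A -> G (minv A)) /\
  (forall A, G A -> G (mneg A)).

Definition discrete (G : M2 -> Prop) : Prop :=
  forall A, G A -> exists eps, 0 < eps /\
    forall B, G B -> psl_dist A B < eps -> psl_dist A B = 0.

Definition torsion_free (G : M2 -> Prop) : Prop :=
  forall A n, G A -> (1 <= n)%nat -> psl_is_id (mpow A n) -> psl_is_id A.

Definition kleinian (G : M2 -> Prop) : Prop :=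
  is_psl_subgroup G /\ discrete G /\ torsion_free G.

Definition trivial_group : M2 -> Prop := psl_is_id.

(** Upper half-space model of H^3: points (z,t), z in C, t > 0, i.e. z + t j.
    Action g.(z + t j) = (a w + b)(c w + d)^{-1} (quaternions):
    D = |cz+d|^2 + |c|^2 t^2,
    z' = ((az+b) conj(cz+d) + a conj(c) t^2)/D,  t' = t/D. *)
Definition H3pt := (C * R)%type.
Definition act (g : M2) (p : H3pt) : H3pt :=
  let z := fst p in let t := snd p in
  let czd := Cplus (Cmult (mc g) z) (md g) in
  let D := (Cmod czd)^2 + (Cmod (mc g))^2 * t^2 in
  (Cmult (Cplus (Cmult (Cplus (Cmult (ma g) z) (mb g)) (Cconj czd))
                (Cmult (Cmult (ma g) (Cconj (mc g))) (RtoC (t^2))))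
         (RtoC (/ D)),
   t / D).

(** the fixed base point O = j = (0,1) *)
Definition Opt : H3pt := (RtoC 0, 1).

(** sphere at infinity = C ∪ {∞} = option C (None = ∞); convergence of points
    of H^3 to a boundary point in the compactification H^3 ∪ S^2_∞. *)
Definition conv_to_boundary (p : nat -> H3pt) (xi : option C) : Prop :=
  match xi with
  | Some z0 => is_lim_seq (fun n => Cmod (Cminus (fst (p n)) z0)) 0 /\
               is_lim_seq (fun n => snd (p n)) 0
  | None => is_lim_seq (fun n => (Cmod (fst (p n)))^2 + (snd (p n))^2) p_infty
  end.

Definition limit_set (G : M2 -> Prop) (xi : option C) : Prop :=
  exists g : nat -> M2, (forall n, G (g n)) /\
    conv_to_boundary (fun n => act (g n) Opt) xi.

Definition domain_nonempty (G : M2 -> Prop) : Prop :=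
  exists xi : option C, ~ limit_set G xi.

Definition geom_conv (Gs : nat -> M2 -> Prop) (G : M2 -> Prop) : Prop :=
  (forall (phi : nat -> nat) (psi : nat -> M2) (A : M2),
      (forall k, (phi k < phi (S k))%nat) ->
      (forall k, Gs (phi k) (psi k)) ->
      psl_conv psi A -> G A) /\
  (forall A, G A -> exists psi : nat -> M2,
      (forall n, Gs n (psi n)) /\ psl_conv psi A).

(** G lies in the path component of H containing the trivial group
    (i.e. (H^3, O_O)): there is a continuous path [0,1] -> H from it to G. *)
Definition in_trivial_path_component (G : M2 -> Prop) : Prop :=
  exists gamma : R -> (M2 -> Prop),
    (forall s, 0 <= s <= 1 -> kleinian (gamma s)) /\
    (forall A, gamma 0 A <-> trivial_group A) /\
    (forall A, gamma 1 A <-> G A) /\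
    (forall s (u : nat -> R), 0 <= s <= 1 -> (forall n, 0 <= u n <= 1) ->
        is_lim_seq u s -> geom_conv (fun n => gamma (u n)) (gamma s)).

(* Choose z0 in Omega(G) different from infinity.  Conjugating G by the affine map
   w |-> (w - (1 - s) z0) / s^2 gives, for 0 < s <= 1, a path of Kleinian groups
   starting at G for s = 1; as s -> 0 it zooms in on z0.  Since a neighbourhood of z0
   misses the limit set, these conjugates converge geometrically to the trivial group.
   The only delicate point is that every limit A of elements of the zoomed groups is
   +-I.  If the lower-left entries of the corresponding elements g of G are unbounded,
   the orbit points g.O accumulate at z0.  Otherwise the g are bounded, hence by
   discreteness eventually constant up to sign; a nontrivial such g must fix z0, and
   the fixed points of nontrivial elements of a torsion-free discrete group lie in the
   limit set. *)
From Stdlib Require Import Reals.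
From Coquelicot Require Import Coquelicot.
From Stdlib Require Import Lra Lia Psatz.
From Stdlib Require Import Classical ClassicalEpsilon FunctionalExtensionality PropExtensionality.
Open Scope R_scope.

Definition madd (A B : M2) : M2 :=
  mkM2 (Cplus (ma A) (ma B)) (Cplus (mb A) (mb B)) (Cplus (mc A) (mc B)) (Cplus (md A) (md B)).

Definition mzero : M2 := mkM2 (RtoC 0) (RtoC 0) (RtoC 0) (RtoC 0).

(* Only for goals whose matrices are local: destructing a section variable loops. *)
Ltac m2_destruct := repeat match goal with A : M2 |- _ => destruct A as [?a ?b ?c ?d] end.

Ltac m2_ring :=
  m2_destruct; unfold madd, mmul, mneg, minv, mid, msub, mdet, mzero in *; simpl in *;
  try (f_equal; ring).

Lemma mmul_assoc A B C0 : mmul A (mmul B C0) = mmul (mmul A B) C0.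
Proof. m2_ring. Qed.
Lemma mmul_mid_l A : mmul mid A = A.
Proof. m2_ring. Qed.
Lemma mmul_mid_r A : mmul A mid = A.
Proof. m2_ring. Qed.
Lemma mdet_mul A B : mdet (mmul A B) = Cmult (mdet A) (mdet B).
Proof. m2_ring; ring. Qed.
Lemma mdet_minv A : mdet (minv A) = mdet A.
Proof. m2_ring; ring. Qed.
Lemma mdet_mneg A : mdet (mneg A) = mdet A.
Proof. m2_ring; ring. Qed.

Lemma minv_l A : SL2 A -> mmul (minv A) A = mid.
Proof. unfold SL2; m2_ring; intro H; f_equal; rewrite <- ?H; ring. Qed.
Lemma minv_r A : SL2 A -> mmul A (minv A) = mid.
Proof. unfold SL2; m2_ring; intro H; f_equal; rewrite <- ?H; ring. Qed.

Lemma minv_mul A B : minv (mmul A B) = mmul (minv B) (minv A).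
Proof. m2_ring. Qed.
Lemma minvK A : minv (minv A) = A.
Proof. m2_ring. Qed.
Lemma minv_mid : minv mid = mid.
Proof. m2_ring. Qed.
Lemma minv_mneg A : minv (mneg A) = mneg (minv A).
Proof. m2_ring. Qed.
Lemma mnegK A : mneg (mneg A) = A.
Proof. m2_ring. Qed.
Lemma mneg_mul_l A B : mmul (mneg A) B = mneg (mmul A B).
Proof. m2_ring. Qed.
Lemma mneg_mul_r A B : mmul A (mneg B) = mneg (mmul A B).
Proof. m2_ring. Qed.

Lemma SL2_mid : SL2 mid.
Proof. unfold SL2; m2_ring; ring. Qed.
Lemma SL2_mul A B : SL2 A -> SL2 B -> SL2 (mmul A B).
Proof. unfold SL2; intros HA HB; rewrite mdet_mul, HA, HB; ring. Qed.
Lemma SL2_minv A : SL2 A -> SL2 (minv A).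
Proof. unfold SL2; rewrite mdet_minv; auto. Qed.
Lemma SL2_mneg A : SL2 A -> SL2 (mneg A).
Proof. unfold SL2; rewrite mdet_mneg; auto. Qed.

Lemma mpow_add B k m : mpow B (k + m) = mmul (mpow B k) (mpow B m).
Proof. induction k as [|k IH]; simpl; [rewrite mmul_mid_l | rewrite IH, mmul_assoc]; auto. Qed.
Lemma SL2_mpow B n : SL2 B -> SL2 (mpow B n).
Proof. intro H; induction n; simpl; [apply SL2_mid | apply SL2_mul; auto]. Qed.

Lemma Cminus_eq0 x y : Cminus x y = RtoC 0 -> x = y.
Proof. intro H. replace x with (Cplus (Cminus x y) y) by ring. rewrite H. ring. Qed.

Lemma RtoC_neq0 s : s <> 0 -> RtoC s <> RtoC 0.
Proof. intros H E. apply H. injection E. auto. Qed.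

Lemma mnorm_ge0 A : 0 <= mnorm A.
Proof.
  unfold mnorm. pose proof (Cmod_ge_0 (ma A)). pose proof (Cmod_ge_0 (mb A)).
  pose proof (Cmod_ge_0 (mc A)). pose proof (Cmod_ge_0 (md A)). lra.
Qed.

Lemma Cmod_entries_le_mnorm X :
  Cmod (ma X) <= mnorm X /\ Cmod (mb X) <= mnorm X /\
  Cmod (mc X) <= mnorm X /\ Cmod (md X) <= mnorm X.
Proof.
  unfold mnorm. pose proof (Cmod_ge_0 (ma X)). pose proof (Cmod_ge_0 (mb X)).
  pose proof (Cmod_ge_0 (mc X)). pose proof (Cmod_ge_0 (md X)). lra.
Qed.

Lemma mnorm_add A B : mnorm (madd A B) <= mnorm A + mnorm B.
Proof.
  unfold mnorm, madd; simpl.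
  pose proof (Cmod_triangle (ma A) (ma B)). pose proof (Cmod_triangle (mb A) (mb B)).
  pose proof (Cmod_triangle (mc A) (mc B)). pose proof (Cmod_triangle (md A) (md B)). lra.
Qed.

Lemma Cmod_dot2_le x y z w :
  Cmod (Cplus (Cmult x y) (Cmult z w)) <= Cmod x * Cmod y + Cmod z * Cmod w.
Proof. eapply Rle_trans; [apply Cmod_triangle|]. rewrite !Cmod_mult. lra. Qed.

Lemma mnorm_mul A B : mnorm (mmul A B) <= mnorm A * mnorm B.
Proof.
  destruct A as [a b c d], B as [a' b' c' d']. unfold mnorm, mmul; simpl.
  pose proof (Cmod_dot2_le a a' b c'). pose proof (Cmod_dot2_le a b' b d').
  pose proof (Cmod_dot2_le c a' d c'). pose proof (Cmod_dot2_le c b' d d').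
  pose proof (Cmod_ge_0 a). pose proof (Cmod_ge_0 b). pose proof (Cmod_ge_0 c).
  pose proof (Cmod_ge_0 d). pose proof (Cmod_ge_0 a'). pose proof (Cmod_ge_0 b').
  pose proof (Cmod_ge_0 c'). pose proof (Cmod_ge_0 d'). nra.
Qed.

Lemma mnorm_mneg A : mnorm (mneg A) = mnorm A.
Proof. unfold mnorm, mneg; simpl. rewrite !Cmod_opp. auto. Qed.

Lemma mnorm_minv A : mnorm (minv A) = mnorm A.
Proof. unfold mnorm, minv; simpl. rewrite !Cmod_opp. lra. Qed.

Lemma mnorm_sub_triangle A B C0 :
  mnorm (msub A C0) <= mnorm (msub A B) + mnorm (msub B C0).
Proof. replace (msub A C0) with (madd (msub A B) (msub B C0)) by m2_ring. apply mnorm_add. Qed.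

Lemma mnorm_subC A B : mnorm (msub A B) = mnorm (msub B A).
Proof. replace (msub B A) with (mneg (msub A B)) by m2_ring. rewrite mnorm_mneg; auto. Qed.

Lemma mnorm_le_sub A B : mnorm A <= mnorm (msub A B) + mnorm B.
Proof.
  pose proof (mnorm_sub_triangle A B mzero).
  replace (msub A mzero) with A in H by m2_ring. replace (msub B mzero) with B in H by m2_ring.
  auto.
Qed.

Lemma mnorm_mul_sub A B A' B' :
  mnorm (msub (mmul A B) (mmul A' B')) <=
  mnorm (msub A A') * mnorm B + mnorm A' * mnorm (msub B B').
Proof.
  replace (msub (mmul A B) (mmul A' B'))
    with (madd (mmul (msub A A') B) (mmul A' (msub B B'))) by m2_ring.
  eapply Rle_trans; [apply mnorm_add|].
  pose proof (mnorm_mul (msub A A') B). pose proof (mnorm_mul A' (msub B B')). lra.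
Qed.

Lemma mnorm_sub_eq0 A B : mnorm (msub A B) = 0 -> A = B.
Proof.
  destruct A as [a b c d], B as [a' b' c' d']. unfold mnorm, msub; simpl. intro H.
  pose proof (Cmod_ge_0 (Cminus a a')). pose proof (Cmod_ge_0 (Cminus b b')).
  pose proof (Cmod_ge_0 (Cminus c c')). pose proof (Cmod_ge_0 (Cminus d d')).
  f_equal; apply Cminus_eq0, Cmod_eq_0; lra.
Qed.

Lemma mnorm_sub_diag A : mnorm (msub A A) = 0.
Proof. replace (msub A A) with mzero by m2_ring. unfold mnorm; simpl. rewrite Cmod_0. lra. Qed.

Lemma psl_dist_ge0 A B : 0 <= psl_dist A B.
Proof. apply Rmin_glb; apply mnorm_ge0. Qed.

Lemma psl_dist_le_mnorm A B : psl_dist A B <= mnorm (msub A B).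
Proof. apply Rmin_l. Qed.

Lemma psl_dist_eq0 A B : psl_dist A B = 0 -> A = B \/ A = mneg B.
Proof.
  unfold psl_dist. intro H.
  destruct (Rle_dec (mnorm (msub A B)) (mnorm (msub A (mneg B)))).
  - rewrite Rmin_left in H by lra. left. apply mnorm_sub_eq0; auto.
  - rewrite Rmin_right in H by lra. right. apply mnorm_sub_eq0; auto.
Qed.

Lemma psl_dist_pm A B : A = B \/ A = mneg B -> psl_dist A B = 0.
Proof.
  unfold psl_dist. pose proof (mnorm_ge0 (msub A B)). pose proof (mnorm_ge0 (msub A (mneg B))).
  intros [-> | ->]; rewrite mnorm_sub_diag in *; [rewrite Rmin_left | rewrite Rmin_right]; lra.
Qed.

Definition null_seq (u : nat -> R) : Prop :=
  forall eps, 0 < eps -> exists N, forall n, (N <= n)%nat -> Rabs (u n) < eps.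

Lemma null_seq_is_lim u : null_seq u <-> is_lim_seq u 0.
Proof.
  rewrite <- is_lim_seq_spec. unfold is_lim_seq', null_seq. split.
  - intros H eps. destruct (H eps (cond_pos eps)) as [N HN]. exists N. intros n Hn.
    rewrite Rminus_0_r. auto.
  - intros H eps Heps. destruct (H (mkposreal eps Heps)) as [N HN]. exists N. intros n Hn.
    specialize (HN n Hn). rewrite Rminus_0_r in HN. auto.
Qed.

Lemma is_lim_seq_null_seq u (s : R) : is_lim_seq u s -> null_seq (fun n => u n - s).
Proof.
  rewrite <- is_lim_seq_spec. intros H eps He. unfold is_lim_seq' in H.
  destruct (H (mkposreal eps He)) as [N HN].
  exists N. intros. apply HN. auto.
Qed.

Lemma null_seq_le_eventually u v :
  (exists N0, forall n, (N0 <= n)%nat -> Rabs (u n) <= v n) -> null_seq v -> null_seq u.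
Proof.
  intros [N0 H] Hv eps He. destruct (Hv eps He) as [N HN]. exists (max N N0). intros n Hn.
  specialize (HN n ltac:(lia)). specialize (H n ltac:(lia)).
  eapply Rle_lt_trans; [apply H|]. eapply Rle_lt_trans; [apply Rle_abs | auto].
Qed.

Lemma null_seq_le u v : (forall n, Rabs (u n) <= v n) -> null_seq v -> null_seq u.
Proof. intro H. apply null_seq_le_eventually. exists O. auto. Qed.

Lemma null_seq_abs u : null_seq u -> null_seq (fun n => Rabs (u n)).
Proof.
  intros H eps He. destruct (H eps He) as [N HN]. exists N. intros. rewrite Rabs_Rabsolu. auto.
Qed.

Lemma null_seq_plus u v : null_seq u -> null_seq v -> null_seq (fun n => u n + v n).
Proof.
  intros Hu Hv eps He. destruct (Hu (eps/2) ltac:(lra)) as [N1 H1].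
  destruct (Hv (eps/2) ltac:(lra)) as [N2 H2]. exists (max N1 N2). intros n Hn.
  specialize (H1 n ltac:(lia)). specialize (H2 n ltac:(lia)).
  eapply Rle_lt_trans; [apply Rabs_triang | lra].
Qed.

Lemma null_seq_scal k u : null_seq u -> null_seq (fun n => k * u n).
Proof.
  intros Hu eps He. pose proof (Rabs_pos k).
  destruct (Hu (eps / (Rabs k + 1))) as [N HN]; [apply Rdiv_lt_0_compat; lra|].
  exists N. intros n Hn. specialize (HN n Hn). rewrite Rabs_mult.
  pose proof (Rabs_pos (u n)).
  apply Rle_lt_trans with ((Rabs k + 1) * Rabs (u n)); [nra|].
  apply Rmult_lt_reg_l with (/ (Rabs k + 1)); [apply Rinv_0_lt_compat; lra|].
  rewrite <- Rmult_assoc, Rinv_l by lra. unfold Rdiv in HN. lra.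
Qed.

Lemma null_seq_mult u v : null_seq u -> null_seq v -> null_seq (fun n => u n * v n).
Proof.
  intros Hu Hv eps He. destruct (Hu 1 ltac:(lra)) as [N1 H1].
  destruct (Hv eps He) as [N2 H2]. exists (max N1 N2). intros n Hn.
  specialize (H1 n ltac:(lia)). specialize (H2 n ltac:(lia)). rewrite Rabs_mult.
  pose proof (Rabs_pos (u n)). pose proof (Rabs_pos (v n)). nra.
Qed.

Lemma null_seq_subseq u (phi : nat -> nat) :
  (forall n, (n <= phi n)%nat) -> null_seq u -> null_seq (fun n => u (phi n)).
Proof.
  intros Hp Hu eps He. destruct (Hu eps He) as [N HN]. exists N. intros n Hn.
  apply HN. specialize (Hp n). lia.
Qed.

Lemma null_seq_geom q : 0 <= q < 1 -> null_seq (fun n => q ^ n).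
Proof. intro H. apply null_seq_is_lim, is_lim_seq_geom. rewrite Rabs_pos_eq; lra. Qed.

Lemma inv_succ_small eps : 0 < eps -> exists N, forall n, (N <= n)%nat -> / (INR n + 1) < eps.
Proof.
  intros He. destruct (INR_archimed eps 1 He) as [N HN]. exists N. intros n Hn.
  apply le_INR in Hn. pose proof (pos_INR N).
  apply Rmult_lt_reg_l with (INR n + 1); [lra|]. rewrite Rinv_r by lra. nra.
Qed.

Lemma null_seq_inv_succ : null_seq (fun n => / (INR n + 1)).
Proof.
  intros eps He. destruct (inv_succ_small eps He) as [N HN]. exists N. intros n Hn.
  pose proof (pos_INR n). rewrite Rabs_pos_eq; [auto | left; apply Rinv_0_lt_compat; lra].
Qed.

Lemma null_seq_inv : null_seq (fun n => / INR n).
Proof.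
  apply null_seq_le_eventually with (fun n => 2 * / (INR n + 1)).
  - exists 1%nat. intros n Hn. apply le_INR in Hn. simpl in Hn.
    rewrite Rabs_pos_eq by (left; apply Rinv_0_lt_compat; lra).
    apply Rmult_le_reg_l with (INR n * (INR n + 1)); [nra|].
    replace (INR n * (INR n + 1) * / INR n) with (INR n + 1) by (field; lra).
    replace (INR n * (INR n + 1) * (2 * / (INR n + 1))) with (2 * INR n) by (field; lra). lra.
  - apply null_seq_scal, null_seq_inv_succ.
Qed.

Lemma Rabs_le_prefix (u : nat -> R) N : exists K, forall n, (n < N)%nat -> Rabs (u n) <= K.
Proof.
  induction N as [|N [K HK]].
  - exists 0. intros; lia.
  - exists (Rmax K (Rabs (u N))). intros n Hn. destruct (Nat.eq_dec n N) as [->|].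
    + apply Rmax_r.
    + eapply Rle_trans; [apply HK; lia | apply Rmax_l].
Qed.

Lemma null_seq_bounded u : null_seq u -> exists K, forall n, Rabs (u n) <= K.
Proof.
  intros Hu. destruct (Hu 1 ltac:(lra)) as [N HN]. destruct (Rabs_le_prefix u N) as [K HK].
  exists (Rmax K 1). intros n. destruct (Compare_dec.le_lt_dec N n).
  - left. eapply Rlt_le_trans; [apply HN; auto | apply Rmax_r].
  - eapply Rle_trans; [apply HK; auto | apply Rmax_l].
Qed.

Definition mconv (X : nat -> M2) (L : M2) : Prop := null_seq (fun n => mnorm (msub (X n) L)).

Lemma mconv_const A : mconv (fun _ => A) A.
Proof.
  intros eps He. exists O. intros. rewrite mnorm_sub_diag, Rabs_R0. auto.
Qed.

Lemma mconv_eventually_eq X Y L :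
  (exists N, forall n, (N <= n)%nat -> X n = Y n) -> mconv Y L -> mconv X L.
Proof.
  intros [N HN] HY. apply null_seq_le_eventually with (fun n => Rabs (mnorm (msub (Y n) L))).
  - exists N. intros n Hn. rewrite HN by auto. lra.
  - apply null_seq_abs; auto.
Qed.

Lemma mconv_subseq X A (phi : nat -> nat) :
  (forall n, (n <= phi n)%nat) -> mconv X A -> mconv (fun n => X (phi n)) A.
Proof. intros. apply (null_seq_subseq (fun n => mnorm (msub (X n) A))); auto. Qed.

Lemma mconv_bounded X L : mconv X L -> exists K, forall n, mnorm (X n) <= K.
Proof.
  intro H. destruct (null_seq_bounded _ H) as [K HK]. exists (K + mnorm L). intro n.
  specialize (HK n). rewrite Rabs_pos_eq in HK by apply mnorm_ge0.
  pose proof (mnorm_le_sub (X n) L). lra.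
Qed.

Lemma mconv_mul X A Y B :
  mconv X A -> mconv Y B -> mconv (fun n => mmul (X n) (Y n)) (mmul A B).
Proof.
  intros HX HY. destruct (mconv_bounded Y B HY) as [K HK].
  apply null_seq_le with (fun n => K * mnorm (msub (X n) A) + mnorm A * mnorm (msub (Y n) B)).
  - intro n. rewrite Rabs_pos_eq by apply mnorm_ge0. eapply Rle_trans; [apply mnorm_mul_sub|].
    pose proof (HK n). pose proof (mnorm_ge0 (msub (X n) A)). pose proof (mnorm_ge0 A). nra.
  - apply null_seq_plus; apply null_seq_scal; auto.
Qed.

Lemma mconv_minv X A : mconv X A -> mconv (fun n => minv (X n)) (minv A).
Proof.
  apply null_seq_le. intro n.
  replace (msub (minv (X n)) (minv A)) with (minv (msub (X n) A)) by m2_ring.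
  rewrite mnorm_minv, Rabs_pos_eq by apply mnorm_ge0. lra.
Qed.

Lemma mconv_psl_conv X A : mconv X A -> psl_conv X A.
Proof.
  intro H. apply null_seq_is_lim. eapply null_seq_le; [|apply H]. intro n.
  rewrite Rabs_pos_eq by apply psl_dist_ge0. apply psl_dist_le_mnorm.
Qed.

Lemma psl_conv_lift psi A : psl_conv psi A ->
  exists psi', (forall n, psi' n = psi n \/ psi' n = mneg (psi n)) /\ mconv psi' A.
Proof.
  unfold psl_conv. intro H. apply null_seq_is_lim in H.
  exists (fun n => if Rle_dec (mnorm (msub (psi n) A)) (mnorm (msub (psi n) (mneg A)))
                  then psi n else mneg (psi n)). split.
  - intro n. destruct Rle_dec; auto.
  - eapply null_seq_le; [|apply H]. intro n. unfold psl_dist.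
    rewrite Rabs_pos_eq by apply mnorm_ge0. destruct Rle_dec.
    + rewrite Rmin_left by auto. lra.
    + rewrite Rmin_right by lra.
      replace (msub (mneg (psi n)) A) with (mneg (msub (psi n) (mneg A))) by m2_ring.
      rewrite mnorm_mneg. lra.
Qed.

Lemma mconv_eventually_pm X L Y N :
  mconv X L -> (forall k, (N <= k)%nat -> X k = Y \/ X k = mneg Y) -> L = Y \/ L = mneg Y.
Proof.
  intros H HN. apply NNPP. intros Hne. apply not_or_and in Hne as [h1 h2].
  assert (p1 : 0 < mnorm (msub Y L)).
  { destruct (mnorm_ge0 (msub Y L)) as [|E]; auto. symmetry in E.
    apply mnorm_sub_eq0 in E. congruence. }
  assert (p2 : 0 < mnorm (msub (mneg Y) L)).
  { destruct (mnorm_ge0 (msub (mneg Y) L)) as [|E]; auto. symmetry in E.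
    apply mnorm_sub_eq0 in E. congruence. }
  destruct (H (Rmin (mnorm (msub Y L)) (mnorm (msub (mneg Y) L)))) as [M HM].
  { apply Rmin_glb_lt; auto. }
  specialize (HM (max M N) ltac:(lia)). rewrite Rabs_pos_eq in HM by apply mnorm_ge0.
  pose proof (Rmin_l (mnorm (msub Y L)) (mnorm (msub (mneg Y) L))).
  pose proof (Rmin_r (mnorm (msub Y L)) (mnorm (msub (mneg Y) L))).
  destruct (HN (max M N) ltac:(lia)) as [e|e]; rewrite e in HM; lra.
Qed.

(** * Bounded sequences in a Kleinian group *)

Definition strictly_increasing (p : nat -> nat) : Prop := forall n, (p n < p (S n))%nat.

Lemma strictly_increasing_ge p : strictly_increasing p -> forall n, (n <= p n)%nat.
Proof. intros H n. induction n; [lia|]. specialize (H n). lia. Qed.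

Lemma strictly_increasing_comp p q :
  strictly_increasing p -> strictly_increasing q -> strictly_increasing (fun n => p (q n)).
Proof.
  intros Hp Hq n.
  assert (mono : forall a b, (a < b)%nat -> (p a < p b)%nat).
  { intros a b Hab. induction Hab; [apply Hp|]. specialize (Hp m). lia. }
  apply mono, Hq.
Qed.

Lemma null_seq_strictly_increasing (u : nat -> R) p q :
  strictly_increasing q -> null_seq (fun n => u (p n)) -> null_seq (fun n => u (p (q n))).
Proof.
  intros Hq H. apply (null_seq_subseq (fun n => u (p n)) q); auto.
  apply strictly_increasing_ge; auto.
Qed.

Lemma bolzano_weierstrass_R (w : nat -> R) K : (forall n, Rabs (w n) <= K) ->
  exists phi, strictly_increasing phi /\ exists l, null_seq (fun n => w (phi n) - l).
Proof.
  intros HK.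
  destruct (Bolzano_Weierstrass w (fun c => -K <= c <= K) (compact_P3 (-K) K)) as [l Hl].
  { intro n. specialize (HK n). apply Rabs_le_between in HK. lra. }
  assert (sel : forall N k : nat, exists p, (N <= p)%nat /\ Rabs (w p - l) < / (INR k + 1)).
  { intros N k. pose proof (pos_INR k).
    assert (Hk : 0 < / (INR k + 1)) by (apply Rinv_0_lt_compat; lra).
    destruct (Hl (disc l (mkposreal _ Hk)) N) as [p [Hp1 Hp2]].
    - exists (mkposreal _ Hk). intros y Hy. auto.
    - exists p. split; auto. }
  set (f := fun N k => proj1_sig (constructive_indefinite_description _ (sel N k))).
  assert (Hf : forall N k, (N <= f N k)%nat /\ Rabs (w (f N k) - l) < / (INR k + 1)).
  { intros N k. unfold f. destruct constructive_indefinite_description. simpl. auto. }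
  set (phi := fix phi n := match n with O => f O O | S m => f (S (phi m)) (S m) end).
  exists phi. split.
  - intro n. simpl. destruct (Hf (S (phi n)) (S n)). lia.
  - exists l. intros eps He. destruct (inv_succ_small eps He) as [N HN]. exists N.
    intros n Hn. specialize (HN n Hn). destruct n as [|m]; simpl.
    + destruct (Hf O O). lra.
    + destruct (Hf (S (phi m)) (S m)). lra.
Qed.

Lemma Cmod_le_Rabs_re_im (z : C) : Cmod z <= Rabs (fst z) + Rabs (snd z).
Proof.
  destruct z as [x y]. unfold Cmod; simpl.
  pose proof (Rabs_pos x). pose proof (Rabs_pos y).
  rewrite <- (sqrt_pow2 (Rabs x + Rabs y)) by lra. apply sqrt_le_1_alt.
  rewrite <- (pow2_abs x), <- (pow2_abs y) at 1. nra.
Qed.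

Lemma Rabs_re_im_le_Cmod (z : C) : Rabs (fst z) <= Cmod z /\ Rabs (snd z) <= Cmod z.
Proof.
  destruct z as [x y]. unfold Cmod; simpl. rewrite <- !sqrt_Rsqr_abs.
  split; apply sqrt_le_1_alt; unfold Rsqr; nra.
Qed.

Lemma bolzano_weierstrass_C (z : nat -> C) K : (forall n, Cmod (z n) <= K) ->
  exists phi, strictly_increasing phi /\ exists l, null_seq (fun n => Cmod (Cminus (z (phi n)) l)).
Proof.
  intros HK.
  destruct (bolzano_weierstrass_R (fun n => fst (z n)) K) as [p1 [i1 [l1 c1]]].
  { intro n. eapply Rle_trans; [apply Rabs_re_im_le_Cmod | auto]. }
  destruct (bolzano_weierstrass_R (fun n => snd (z (p1 n))) K) as [p2 [i2 [l2 c2]]].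
  { intro n. eapply Rle_trans; [apply Rabs_re_im_le_Cmod | auto]. }
  exists (fun n => p1 (p2 n)). split; [apply strictly_increasing_comp; auto|].
  exists (l1, l2).
  apply null_seq_le with
    (fun n => Rabs (fst (z (p1 (p2 n))) - l1) + Rabs (snd (z (p1 (p2 n))) - l2)).
  - intro n. rewrite Rabs_pos_eq by apply Cmod_ge_0.
    eapply Rle_trans; [apply Cmod_le_Rabs_re_im|].
    destruct (z (p1 (p2 n))) as [x y]. simpl. right. f_equal; f_equal; ring.
  - apply null_seq_plus; apply null_seq_abs; auto.
    apply (null_seq_strictly_increasing (fun m => fst (z m) - l1) p1 p2); auto.
Qed.

Lemma bolzano_weierstrass_M2 (X : nat -> M2) K : (forall n, mnorm (X n) <= K) ->
  exists phi, strictly_increasing phi /\ exists L, mconv (fun n => X (phi n)) L.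
Proof.
  intros HK. pose proof (fun n => Cmod_entries_le_mnorm (X n)) as HX.
  destruct (bolzano_weierstrass_C (fun n => ma (X n)) K) as [p1 [i1 [l1 c1]]].
  { intro n. specialize (HX n). specialize (HK n). lra. }
  destruct (bolzano_weierstrass_C (fun n => mb (X (p1 n))) K) as [p2 [i2 [l2 c2]]].
  { intro n. specialize (HX (p1 n)). specialize (HK (p1 n)). lra. }
  destruct (bolzano_weierstrass_C (fun n => mc (X (p1 (p2 n)))) K) as [p3 [i3 [l3 c3]]].
  { intro n. specialize (HX (p1 (p2 n))). specialize (HK (p1 (p2 n))). lra. }
  destruct (bolzano_weierstrass_C (fun n => md (X (p1 (p2 (p3 n))))) K) as [p4 [i4 [l4 c4]]].
  { intro n. specialize (HX (p1 (p2 (p3 n)))). specialize (HK (p1 (p2 (p3 n)))). lra. }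
  assert (i34 : strictly_increasing (fun n => p3 (p4 n))) by (apply strictly_increasing_comp; auto).
  assert (i234 : strictly_increasing (fun n => p2 (p3 (p4 n))))
    by (apply strictly_increasing_comp; auto).
  exists (fun n => p1 (p2 (p3 (p4 n)))). split; [apply strictly_increasing_comp; auto|].
  exists (mkM2 l1 l2 l3 l4). unfold mconv, mnorm, msub. simpl.
  repeat apply null_seq_plus.
  - apply (null_seq_strictly_increasing (fun m => Cmod (Cminus (ma (X m)) l1)) p1
             (fun n => p2 (p3 (p4 n)))); auto.
  - apply (null_seq_strictly_increasing (fun m => Cmod (Cminus (mb (X m)) l2))
             (fun n => p1 (p2 n)) (fun n => p3 (p4 n))); auto.
  - apply (null_seq_strictly_increasing (fun m => Cmod (Cminus (mc (X m)) l3))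
             (fun n => p1 (p2 (p3 n))) p4); auto.
  - auto.
Qed.

Section Kleinian.

Variable G : M2 -> Prop.
Hypothesis HG : kleinian G.

Lemma kleinian_SL2 A : G A -> SL2 A.
Proof. destruct HG as [[HS _] _]. auto. Qed.
Lemma kleinian_mid : G mid.
Proof. destruct HG as [[_ [H _]] _]. auto. Qed.
Lemma kleinian_mul A B : G A -> G B -> G (mmul A B).
Proof. destruct HG as [[_ [_ [H _]]] _]. auto. Qed.
Lemma kleinian_minv A : G A -> G (minv A).
Proof. destruct HG as [[_ [_ [_ [H _]]]] _]. auto. Qed.
Lemma kleinian_mneg A : G A -> G (mneg A).
Proof. destruct HG as [[_ [_ [_ [_ H]]]] _]. auto. Qed.
Lemma kleinian_mpow B n : G B -> G (mpow B n).
Proof. intro HB. induction n; simpl; [apply kleinian_mid | apply kleinian_mul; auto]. Qed.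

(* The quotients X_k^-1 X_(k+1) lie in G and tend to I, so by discreteness they are
   eventually +-I. *)
Lemma kleinian_mconv_eventually_pm X L : (forall k, G (X k)) -> mconv X L ->
  exists N, forall k, (N <= k)%nat -> X k = X N \/ X k = mneg (X N).
Proof.
  intros HX HL. destruct HG as [_ [Hdisc _]].
  destruct (mconv_bounded X L HL) as [K HK].
  set (h := fun k => mmul (minv (X k)) (X (S k))).
  assert (Hh : forall k, mnorm (msub (h k) mid) <=
                         K * (mnorm (msub (X (S k)) L) + mnorm (msub (X k) L))).
  { intro k. unfold h. rewrite <- (minv_l (X k)) by (apply kleinian_SL2; auto).
    replace (msub (mmul (minv (X k)) (X (S k))) (mmul (minv (X k)) (X k)))
      with (mmul (minv (X k)) (msub (X (S k)) (X k))) by m2_ring.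
    eapply Rle_trans; [apply mnorm_mul|]. rewrite mnorm_minv.
    pose proof (mnorm_sub_triangle (X (S k)) L (X k)). rewrite (mnorm_subC L (X k)) in H.
    pose proof (HK k). pose proof (mnorm_ge0 (X k)).
    pose proof (mnorm_ge0 (msub (X (S k)) (X k))). nra. }
  destruct (Hdisc mid kleinian_mid) as [eps [Heps Hd]].
  assert (Hc : null_seq (fun k => K * (mnorm (msub (X (S k)) L) + mnorm (msub (X k) L)))).
  { apply null_seq_scal, null_seq_plus; auto.
    apply (null_seq_subseq (fun n => mnorm (msub (X n) L)) S); auto. }
  destruct (Hc eps Heps) as [N HN]. exists N.
  assert (step : forall k, (N <= k)%nat -> X (S k) = X k \/ X (S k) = mneg (X k)).
  { intros k Hk.
    assert (dl : psl_dist mid (h k) < eps).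
    { eapply Rle_lt_trans; [apply psl_dist_le_mnorm|]. rewrite mnorm_subC.
      eapply Rle_lt_trans; [apply Hh|]. eapply Rle_lt_trans; [apply Rle_abs | auto]. }
    assert (Gh : G (h k)) by (apply kleinian_mul; [apply kleinian_minv|]; auto).
    pose proof (psl_dist_eq0 _ _ (Hd _ Gh dl)) as Hpm.
    assert (E : X (S k) = mmul (X k) (h k)).
    { unfold h; cbv beta.
      rewrite mmul_assoc, minv_r, mmul_mid_l by (apply kleinian_SL2; auto). auto. }
    rewrite E. destruct Hpm as [e | e]; [left | right].
    - rewrite <- e, mmul_mid_r. auto.
    - replace (h k) with (mneg mid) by (rewrite e, mnegK; auto).
      rewrite mneg_mul_r, mmul_mid_r. auto. }
  intros k Hk. replace k with (N + (k - N))%nat by lia. induction (k - N)%nat as [|d IH].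
  - left. f_equal. lia.
  - replace (N + S d)%nat with (S (N + d)) by lia.
    destruct (step (N + d)%nat ltac:(lia)) as [-> | ->]; destruct IH as [-> | ->];
      rewrite ?mnegK; auto.
Qed.

Lemma kleinian_mconv_closed X L : (forall k, G (X k)) -> mconv X L -> G L.
Proof.
  intros HX HL. destruct (kleinian_mconv_eventually_pm X L HX HL) as [N HN].
  destruct (mconv_eventually_pm X L (X N) N HL HN) as [-> | ->]; [|apply kleinian_mneg]; auto.
Qed.

Lemma kleinian_bounded_eventually_pm X K : (forall k, G (X k)) -> (forall n, mnorm (X n) <= K) ->
  exists phi, strictly_increasing phi /\
    exists N, forall k, (N <= k)%nat -> X (phi k) = X (phi N) \/ X (phi k) = mneg (X (phi N)).
Proof.
  intros HX HK. destruct (bolzano_weierstrass_M2 X K HK) as [phi [ip [L HL]]].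
  exists phi. split; auto. apply (kleinian_mconv_eventually_pm (fun k => X (phi k)) L); auto.
Qed.

End Kleinian.

Definition mconj (P g : M2) : M2 := mmul (mmul P g) (minv P).
Definition conj_group (P : M2) (G : M2 -> Prop) (A : M2) : Prop := exists g, G g /\ A = mconj P g.

Lemma msub_mconj P X Y : msub (mconj P X) (mconj P Y) = mconj P (msub X Y).
Proof. unfold mconj. m2_ring. Qed.

Section Conjugation.

Variable P : M2.
Hypothesis HP : SL2 P.

Lemma mconjK A : mconj (minv P) (mconj P A) = A.
Proof.
  unfold mconj. rewrite minvK.
  rewrite (mmul_assoc (minv P) (mmul P A) (minv P)), (mmul_assoc (minv P) P A), minv_l,
    mmul_mid_l by auto.
  rewrite <- (mmul_assoc A), minv_l, mmul_mid_r by auto. auto.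
Qed.

Lemma mconj_mul g h : mmul (mconj P g) (mconj P h) = mconj P (mmul g h).
Proof.
  unfold mconj. rewrite <- !mmul_assoc. do 2 f_equal.
  rewrite (mmul_assoc (minv P) P), minv_l, mmul_mid_l by auto. auto.
Qed.

Lemma mconj_mid : mconj P mid = mid.
Proof. unfold mconj. rewrite mmul_mid_r. apply minv_r; auto. Qed.

Lemma mconj_mneg g : mconj P (mneg g) = mneg (mconj P g).
Proof. unfold mconj. rewrite mneg_mul_r, mneg_mul_l. auto. Qed.

Lemma mconj_minv g : minv (mconj P g) = mconj P (minv g).
Proof. unfold mconj. rewrite !minv_mul, minvK, mmul_assoc. auto. Qed.

Lemma SL2_mconj g : SL2 g -> SL2 (mconj P g).
Proof. intros. apply SL2_mul; [apply SL2_mul | apply SL2_minv]; auto. Qed.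

Lemma mconj_mpow g n : mpow (mconj P g) n = mconj P (mpow g n).
Proof. induction n as [|n IH]; simpl; [rewrite mconj_mid | rewrite IH, mconj_mul]; auto. Qed.

Lemma psl_is_id_mconj X : psl_is_id X -> psl_is_id (mconj P X).
Proof.
  intros [-> | ->]; unfold psl_is_id; rewrite ?mconj_mneg, mconj_mid; auto.
Qed.

Lemma psl_dist_mconj X Y :
  psl_dist (mconj P X) (mconj P Y) <= mnorm P * mnorm (minv P) * psl_dist X Y.
Proof.
  assert (Hn : forall Z, mnorm (mconj P Z) <= mnorm P * mnorm (minv P) * mnorm Z).
  { intro Z. unfold mconj. eapply Rle_trans; [apply mnorm_mul|].
    pose proof (mnorm_mul P Z). pose proof (mnorm_ge0 (minv P)). pose proof (mnorm_ge0 Z).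
    pose proof (mnorm_ge0 P). pose proof (mnorm_ge0 (mmul P Z)). nra. }
  unfold psl_dist. rewrite <- mconj_mneg, !msub_mconj.
  pose proof (Hn (msub X Y)). pose proof (Hn (msub X (mneg Y))).
  pose proof (mnorm_ge0 (minv P)). pose proof (mnorm_ge0 P).
  destruct (Rle_dec (mnorm (msub X Y)) (mnorm (msub X (mneg Y)))).
  - rewrite (Rmin_left (mnorm (msub X Y))) by auto. eapply Rle_trans; [apply Rmin_l | auto].
  - rewrite (Rmin_right (mnorm (msub X Y))) by lra. eapply Rle_trans; [apply Rmin_r | auto].
Qed.

End Conjugation.

Lemma psl_is_id_mconj_inv P X : SL2 P -> psl_is_id (mconj P X) -> psl_is_id X.
Proof.
  intros HP H. rewrite <- (mconjK P HP X). apply psl_is_id_mconj; auto. apply SL2_minv; auto.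
Qed.

Lemma discrete_conj_group P G : SL2 P -> kleinian G -> discrete (conj_group P G).
Proof.
  intros HP HG A [g [Gg ->]]. destruct HG as [_ [Hdisc _]].
  destruct (Hdisc g Gg) as [eps [He Hd]].
  set (K := mnorm (minv P) * mnorm (minv (minv P)) + 1).
  assert (HK : 0 < K).
  { unfold K. pose proof (mnorm_ge0 (minv P)). pose proof (mnorm_ge0 (minv (minv P))). nra. }
  exists (eps / K). split; [apply Rdiv_lt_0_compat; auto|].
  intros B [h [Gh ->]] Hlt.
  assert (d1 : psl_dist g h < eps).
  { pose proof (psl_dist_mconj (minv P) (mconj P g) (mconj P h)). rewrite !mconjK in H by auto.
    pose proof (psl_dist_ge0 (mconj P g) (mconj P h)).
    pose proof (mnorm_ge0 (minv P)). pose proof (mnorm_ge0 (minv (minv P))).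
    eapply Rle_lt_trans; [apply H|].
    apply Rle_lt_trans with (K * psl_dist (mconj P g) (mconj P h)); [unfold K; nra|].
    apply Rmult_lt_reg_l with (/ K); [apply Rinv_0_lt_compat; auto|].
    rewrite <- Rmult_assoc, Rinv_l by lra. unfold Rdiv in Hlt. lra. }
  apply psl_dist_pm. destruct (psl_dist_eq0 _ _ (Hd h Gh d1)) as [-> | ->]; auto.
  right. apply mconj_mneg.
Qed.

Lemma kleinian_conj_group P G : SL2 P -> kleinian G -> kleinian (conj_group P G).
Proof.
  intros HP HG. split; [|split; [apply discrete_conj_group; auto|]].
  - split; [|split; [|split; [|split]]].
    + intros A [g [Gg ->]]. apply SL2_mconj, (kleinian_SL2 G); auto.
    + exists mid. split; [apply (kleinian_mid G); auto | rewrite mconj_mid; auto].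
    + intros A B [g [Gg ->]] [h [Gh ->]]. exists (mmul g h).
      split; [apply (kleinian_mul G); auto | rewrite mconj_mul; auto].
    + intros A [g [Gg ->]]. exists (minv g). split; [apply (kleinian_minv G); auto|].
      apply mconj_minv; auto.
    + intros A [g [Gg ->]]. exists (mneg g). split; [apply (kleinian_mneg G); auto|].
      symmetry. apply mconj_mneg.
  - intros A n [g [Gg ->]] Hn Hid. destruct HG as [_ [_ Htf]].
    rewrite mconj_mpow in Hid by auto. apply psl_is_id_mconj_inv in Hid; auto.
    apply psl_is_id_mconj; auto. apply (Htf g n); auto.
Qed.

Lemma kleinian_trivial_group : kleinian trivial_group.
Proof.
  unfold trivial_group. split; [|split].
  - split; [|split; [|split; [|split]]].
    + intros A [-> | ->]; [|apply SL2_mneg]; apply SL2_mid.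
    + left; auto.
    + intros A B [-> | ->] [-> | ->]; unfold psl_is_id;
        rewrite ?mneg_mul_l, ?mneg_mul_r, ?mmul_mid_l, ?mnegK; auto.
    + intros A [-> | ->]; unfold psl_is_id; rewrite ?minv_mneg, minv_mid; auto.
    + intros A [-> | ->]; unfold psl_is_id; rewrite ?mnegK; auto.
  - intros A HA. exists 1. split; [lra|]. intros B HB _. apply psl_dist_pm.
    destruct HA as [-> | ->], HB as [-> | ->]; rewrite ?mnegK; auto.
  - intros A n HA _ _. auto.
Qed.

Lemma kleinian_ext G1 G2 : (forall A, G1 A <-> G2 A) -> kleinian G1 -> kleinian G2.
Proof.
  intros H HG. replace G2 with G1; auto.
  apply functional_extensionality. intro A. apply propositional_extensionality. auto.
Qed.

Lemma sum_div_sum_sq_le p q : 0 <= p -> 0 <= q -> 0 < p + q ->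
  (p + q) / (p * p + q * q) <= 2 / (p + q).
Proof.
  intros. pose proof (Rle_0_sqr (p - q)). unfold Rsqr in *. assert (0 < p * p + q * q) by nra.
  apply Rmult_le_reg_l with ((p * p + q * q) * (p + q)); [nra|].
  replace ((p * p + q * q) * (p + q) * ((p + q) / (p * p + q * q))) with ((p + q) * (p + q))
    by (field; lra).
  replace ((p * p + q * q) * (p + q) * (2 / (p + q))) with (2 * (p * p + q * q)) by (field; lra).
  nra.
Qed.

Lemma inv_sum_sq_le p q : 0 <= p -> 0 <= q -> 0 < p + q ->
  / (p * p + q * q) <= 2 / ((p + q) * (p + q)).
Proof.
  intros. pose proof (Rle_0_sqr (p - q)). unfold Rsqr in *. assert (0 < p * p + q * q) by nra.
  assert (0 < (p + q) * (p + q)) by nra.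
  apply Rmult_le_reg_l with ((p * p + q * q) * ((p + q) * (p + q))); [nra|].
  replace ((p * p + q * q) * ((p + q) * (p + q)) * / (p * p + q * q)) with ((p + q) * (p + q))
    by (field; lra).
  replace ((p * p + q * q) * ((p + q) * (p + q)) * (2 / ((p + q) * (p + q))))
    with (2 * (p * p + q * q)) by (field; lra).
  nra.
Qed.

(* h.O = (b conj(d) + a conj(c)) / D + j / D with D = |c|^2 + |d|^2. *)
Lemma act_Opt_sub h w : 0 < Cmod (mc h) * Cmod (mc h) + Cmod (md h) * Cmod (md h) ->
  let D := Cmod (mc h) * Cmod (mc h) + Cmod (md h) * Cmod (md h) in
  Cminus (fst (act h Opt)) w =
    Cmult (Cplus (Cmult (Cminus (mb h) (Cmult w (md h))) (Cconj (md h)))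
                 (Cmult (Cminus (ma h) (Cmult w (mc h))) (Cconj (mc h)))) (RtoC (/ D)) /\
  snd (act h Opt) = / D.
Proof.
  destruct h as [a b c d]. intros HD D0. unfold act, Opt, D0 in *; cbn [fst snd ma mb mc md] in *.
  clear D0. set (D := Cmod c * Cmod c + Cmod d * Cmod d) in *.
  replace (Cplus (Cmult c (RtoC 0)) d) with d by ring.
  replace (Cmod d ^ 2 + Cmod c ^ 2 * 1 ^ 2) with D by (unfold D; ring).
  assert (E : RtoC D = Cplus (Cmult c (Cconj c)) (Cmult d (Cconj d))).
  { unfold D. rewrite <- !Cmod2_conj, <- RtoC_plus. f_equal. ring. }
  split; [|unfold Rdiv; ring].
  rewrite RtoC_inv by lra. rewrite E.
  replace (RtoC (1 ^ 2)) with (RtoC 1) by (f_equal; ring).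
  field. rewrite <- E. apply RtoC_neq0. lra.
Qed.

Lemma orbit_point_estimate h w : 0 < Cmod (mc h) + Cmod (md h) ->
  let S := Cmod (mc h) + Cmod (md h) in
  Cmod (Cminus (fst (act h Opt)) w) <=
    2 * (Cmod (Cminus (ma h) (Cmult w (mc h))) + Cmod (Cminus (mb h) (Cmult w (md h)))) / S /\
  0 <= snd (act h Opt) <= 2 / (S * S).
Proof.
  intros Hp S; unfold S. pose proof (Cmod_ge_0 (mc h)) as Hc. pose proof (Cmod_ge_0 (md h)) as Hd.
  assert (HD : 0 < Cmod (mc h) * Cmod (mc h) + Cmod (md h) * Cmod (md h)).
  { pose proof (Rle_0_sqr (Cmod (mc h) - Cmod (md h))). unfold Rsqr in *. nra. }
  destruct (act_Opt_sub h w HD) as [E1 E2]. rewrite E1, E2.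
  set (D := Cmod (mc h) * Cmod (mc h) + Cmod (md h) * Cmod (md h)) in *.
  set (K := Cmod (Cminus (ma h) (Cmult w (mc h))) + Cmod (Cminus (mb h) (Cmult w (md h)))).
  pose proof (sum_div_sum_sq_le _ _ Hc Hd Hp). pose proof (inv_sum_sq_le _ _ Hc Hd Hp).
  fold D in H, H0.
  assert (0 < / D) by (apply Rinv_0_lt_compat; auto).
  split; [|split; [lra | auto]].
  rewrite Cmod_mult, Cmod_R, Rabs_pos_eq by lra.
  assert (HK : Cmod (Cplus (Cmult (Cminus (mb h) (Cmult w (md h))) (Cconj (md h)))
                          (Cmult (Cminus (ma h) (Cmult w (mc h))) (Cconj (mc h))))
              <= K * (Cmod (mc h) + Cmod (md h))).
  { eapply Rle_trans; [apply Cmod_triangle|]. rewrite !Cmod_mult, !Cmod_conj. unfold K.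
    pose proof (Cmod_ge_0 (Cminus (ma h) (Cmult w (mc h)))).
    pose proof (Cmod_ge_0 (Cminus (mb h) (Cmult w (md h)))). nra. }
  assert (0 <= K) by (unfold K; pose proof (Cmod_ge_0 (Cminus (ma h) (Cmult w (mc h))));
                       pose proof (Cmod_ge_0 (Cminus (mb h) (Cmult w (md h)))); lra).
  apply Rle_trans with (K * ((Cmod (mc h) + Cmod (md h)) / D)).
  - unfold Rdiv. rewrite <- Rmult_assoc. apply Rmult_le_compat_r; lra.
  - replace (2 * K / (Cmod (mc h) + Cmod (md h))) with (K * (2 / (Cmod (mc h) + Cmod (md h))))
      by (unfold Rdiv; ring).
    apply Rmult_le_compat_l; auto.
Qed.

Lemma conv_to_boundary_of_bound (h : nat -> M2) z0 e :
  (exists N, forall n, (N <= n)%nat -> Cmod (Cminus (fst (act (h n) Opt)) z0) <= e n /\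
      0 <= snd (act (h n) Opt) <= e n) ->
  null_seq e -> conv_to_boundary (fun n => act (h n) Opt) (Some z0).
Proof.
  intros [N HN] He. split; apply null_seq_is_lim; apply (null_seq_le_eventually _ e); auto;
    exists N; intros n Hn; destruct (HN n Hn) as [h1 h2].
  - rewrite Rabs_pos_eq by apply Cmod_ge_0. auto.
  - rewrite Rabs_pos_eq; lra.
Qed.

(** * Fixed points of nontrivial elements lie in the limit set *)

(* B fixes z0 iff fix_eq B z0 = 0.  Conjugating by the translation w |-> w + z0 then
   makes B upper triangular with diagonal entries fix_eig1 B z0 and fix_eig2 B z0;
   the derivative of B at z0 is fix_eig1 B z0 ^ 2. *)
Definition fix_eq (B : M2) (z0 : C) : C :=
  Cminus (Cminus (Cplus (Cmult (ma B) z0) (mb B)) (Cmult (Cmult (mc B) z0) z0)) (Cmult (md B) z0).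
Definition fix_eig1 (B : M2) (z0 : C) : C := Cminus (ma B) (Cmult z0 (mc B)).
Definition fix_eig2 (B : M2) (z0 : C) : C := Cplus (Cmult (mc B) z0) (md B).

Section FixedPoint.

Variables (B : M2) (z0 : C).
Hypothesis HS : SL2 B.
Hypothesis HF : fix_eq B z0 = RtoC 0.

Lemma fix_eig_mul : Cmult (fix_eig1 B z0) (fix_eig2 B z0) = RtoC 1.
Proof.
  unfold SL2 in HS. rewrite <- HS.
  transitivity (Cplus (mdet B) (Cmult (mc B) (fix_eq B z0))).
  - destruct B; unfold fix_eig1, fix_eig2, mdet, fix_eq; simpl. ring.
  - rewrite HF. ring.
Qed.

Lemma fix_eig_mod_mul : Cmod (fix_eig1 B z0) * Cmod (fix_eig2 B z0) = 1.
Proof. rewrite <- Cmod_mult, fix_eig_mul. apply Cmod_1. Qed.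

Lemma mb_fix :
  mb B = Cminus (Cplus (Cmult (Cmult (mc B) z0) z0) (Cmult (md B) z0)) (Cmult (ma B) z0).
Proof. apply Cminus_eq0. rewrite <- HF. unfold fix_eq. ring. Qed.

Lemma mpow_fix_entries n :
  ma (mpow B n) = Cplus (Cpow (fix_eig1 B z0) n) (Cmult z0 (mc (mpow B n))) /\
  mb (mpow B n) = Cminus (Cmult z0 (md (mpow B n))) (Cmult z0 (Cpow (fix_eig1 B z0) n)) /\
  Cplus (md (mpow B n)) (Cmult z0 (mc (mpow B n))) = Cpow (fix_eig2 B z0) n.
Proof.
  pose proof mb_fix as Hb. induction n as [|n IH]; [simpl; repeat split; ring|].
  cbn [mpow]. destruct (mpow B n) as [xa xb xc xd]. cbn [ma mb mc md] in *.
  destruct IH as [E1 [E2 E3]].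
  assert (E4 : xd = Cminus (Cpow (fix_eig2 B z0) n) (Cmult z0 xc)) by (rewrite <- E3; ring).
  clear HS HF. destruct B as [a b c d]. cbn [ma mb mc md] in *. subst b.
  unfold mmul, fix_eig1, fix_eig2 in *; cbn [ma mb mc md] in *. rewrite E1, E2, E4, !Cpow_S.
  repeat split; ring.
Qed.

Lemma mpow_fix_mc_succ n : mc (mpow B (S n)) =
  Cplus (Cmult (mc B) (Cpow (fix_eig1 B z0) n)) (Cmult (fix_eig2 B z0) (mc (mpow B n))).
Proof.
  destruct (mpow_fix_entries n) as [E1 _]. cbn [mpow].
  destruct (mpow B n) as [xa xb xc xd]. cbn [ma mb mc md] in *. rewrite E1.
  clear HS HF. destruct B as [a b c d]. unfold mmul, fix_eig2; cbn [ma mb mc md]. ring.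
Qed.

Lemma mpow_fix_orbit_estimate n :
  let X := mpow B n in
  0 < Cmod (mc X) + Cmod (md X) ->
  Cmod (Cminus (fst (act X Opt)) z0) <=
    2 * (1 + Cmod z0) * Cmod (fix_eig1 B z0) ^ n / (Cmod (mc X) + Cmod (md X)) /\
  0 <= snd (act X Opt) <= 2 / ((Cmod (mc X) + Cmod (md X)) * (Cmod (mc X) + Cmod (md X))).
Proof.
  intros X HX. destruct (mpow_fix_entries n) as [E1 [E2 _]].
  destruct (orbit_point_estimate X z0 HX) as [O1 O2]. split; auto.
  eapply Rle_trans; [apply O1|]. fold X in E1, E2. rewrite E1, E2.
  replace (Cminus (Cplus (Cpow (fix_eig1 B z0) n) (Cmult z0 (mc X))) (Cmult z0 (mc X)))
    with (Cpow (fix_eig1 B z0) n) by ring.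
  replace (Cminus (Cminus (Cmult z0 (md X)) (Cmult z0 (Cpow (fix_eig1 B z0) n))) (Cmult z0 (md X)))
    with (Copp (Cmult z0 (Cpow (fix_eig1 B z0) n))) by ring.
  rewrite Cmod_opp, Cmod_mult, Cmod_pow. right. field. lra.
Qed.

Lemma mnorm_mpow_fix_le n K :
  Cmod (mc (mpow B n)) <= K -> Cmod (Cpow (fix_eig1 B z0) n) <= 1 ->
  Cmod (Cpow (fix_eig2 B z0) n) <= 1 ->
  mnorm (mpow B n) <= 2 + 2 * (Cmod z0 * K) + Cmod z0 * (2 + Cmod z0 * K) + K.
Proof.
  intros Hc Hmu Hnu. destruct (mpow_fix_entries n) as [E1 [E2 E3]].
  assert (Ed : md (mpow B n) = Cminus (Cpow (fix_eig2 B z0) n) (Cmult z0 (mc (mpow B n))))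
    by (rewrite <- E3; ring).
  set (X := mpow B n) in *. pose proof (Cmod_ge_0 z0). pose proof (Cmod_ge_0 (mc X)).
  assert (Ha : Cmod (ma X) <= 1 + Cmod z0 * K).
  { rewrite E1. eapply Rle_trans; [apply Cmod_triangle|]. rewrite Cmod_mult. nra. }
  assert (Hd : Cmod (md X) <= 1 + Cmod z0 * K).
  { rewrite Ed. unfold Cminus. eapply Rle_trans; [apply Cmod_triangle|].
    rewrite Cmod_opp, Cmod_mult. nra. }
  assert (Hb : Cmod (mb X) <= Cmod z0 * (2 + Cmod z0 * K)).
  { rewrite E2. unfold Cminus. eapply Rle_trans; [apply Cmod_triangle|].
    rewrite Cmod_opp, !Cmod_mult. pose proof (Cmod_ge_0 (md X)). nra. }
  unfold mnorm. lra.
Qed.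

End FixedPoint.

Lemma limit_set_attracting_fix G B z0 :
  kleinian G -> G B -> fix_eq B z0 = RtoC 0 -> Cmod (fix_eig1 B z0) < 1 ->
  limit_set G (Some z0).
Proof.
  intros HG HB HF Hm. pose proof (kleinian_SL2 G HG B HB) as HS.
  set (Z := 1 + Cmod z0). set (q := Cmod (fix_eig1 B z0)).
  assert (HZ : 1 <= Z) by (unfold Z; pose proof (Cmod_ge_0 z0); lra).
  exists (mpow B). split; [intro n; apply kleinian_mpow; auto|].
  apply conv_to_boundary_of_bound with (fun n => 2 * (Z * Z) * (q ^ n * q ^ n)).
  2: { apply null_seq_scal, null_seq_mult; apply null_seq_geom; split; auto; apply Cmod_ge_0. }
  exists O. intros n _.
  destruct (mpow_fix_entries B z0 HF n) as [_ [_ E3]].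
  set (X := mpow B n) in *. set (S := Cmod (mc X) + Cmod (md X)).
  assert (Hmn : q ^ n * Cmod (Cpow (fix_eig2 B z0) n) = 1).
  { unfold q. rewrite <- Cmod_pow, <- Cmod_mult, <- Cpow_mult_l, fix_eig_mul, Cpow_1_l by auto.
    apply Cmod_1. }
  assert (Hnu : Cmod (Cpow (fix_eig2 B z0) n) <= Z * S).
  { rewrite <- E3. eapply Rle_trans; [apply Cmod_triangle|]. rewrite Cmod_mult. unfold Z, S.
    pose proof (Cmod_ge_0 (mc X)). pose proof (Cmod_ge_0 (md X)). pose proof (Cmod_ge_0 z0). nra. }
  assert (Hq : 0 <= q ^ n) by (apply pow_le, Cmod_ge_0).
  assert (key : 1 <= Z * q ^ n * S) by nra.
  assert (HSp : 0 < S).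
  { assert (0 <= S)
      by (unfold S; pose proof (Cmod_ge_0 (mc X)); pose proof (Cmod_ge_0 (md X)); lra).
    destruct (Req_dec S 0) as [E|]; [rewrite E, Rmult_0_r in key|]; lra. }
  destruct (mpow_fix_orbit_estimate B z0 HF n HSp) as [O1 [O2 O3]]. fold X S Z q in O1, O2, O3.
  assert (HSi : / S <= Z * q ^ n).
  { apply Rmult_le_reg_l with S; auto. rewrite Rinv_r by lra. lra. }
  assert (0 < / S) by (apply Rinv_0_lt_compat; auto).
  split; [|split; auto].
  - eapply Rle_trans; [apply O1|]. unfold Rdiv.
    apply Rle_trans with (2 * Z * q ^ n * (Z * q ^ n)); [|right; ring].
    apply Rmult_le_compat_l; nra.
  - eapply Rle_trans; [apply O3|]. unfold Rdiv. rewrite Rinv_mult.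
    apply Rle_trans with (2 * ((Z * q ^ n) * (Z * q ^ n))); [|right; ring].
    apply Rmult_le_compat_l; [lra|]. apply Rmult_le_compat; lra.
Qed.

Lemma Csq_eq1 (a : C) : Cmult a a = RtoC 1 -> a = RtoC 1 \/ a = Copp (RtoC 1).
Proof.
  intro H. assert (E : Cmult (Cminus a (RtoC 1)) (Cplus a (RtoC 1)) = RtoC 0).
  { transitivity (Cminus (Cmult a a) (RtoC 1)); [ring|]. rewrite H. ring. }
  apply (f_equal Cmod) in E. rewrite Cmod_mult, Cmod_0 in E. apply Rmult_integral in E.
  destruct E as [E|E]; apply Cmod_eq_0 in E; [left|right]; apply Cminus_eq0; auto.
  rewrite <- E. ring.
Qed.

Section Parabolic.

Variables (B : M2) (z0 : C).
Hypothesis HS : SL2 B.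
Hypothesis HF : fix_eq B z0 = RtoC 0.
Hypothesis Heq : fix_eig1 B z0 = fix_eig2 B z0.

Lemma psl_is_id_of_mc_eq0 : mc B = RtoC 0 -> psl_is_id B.
Proof.
  intro Hc0. pose proof (fix_eig_mul B z0 HS HF) as H1. pose proof (mb_fix B z0 HF) as Hb.
  rewrite <- Heq in H1. clear HS HF.
  destruct B as [a b c d]. unfold fix_eig1, fix_eig2 in *. cbn [ma mb mc md] in *. subst c.
  assert (Ha : a = d) by (transitivity (Cminus a (Cmult z0 (RtoC 0))); [ring | rewrite Heq; ring]).
  subst d. replace b with (RtoC 0) by (rewrite Hb; ring).
  assert (Haa : Cmult a a = RtoC 1) by (rewrite <- H1; ring).
  destruct (Csq_eq1 a Haa) as [-> | ->]; [left|right]; unfold mid, mneg; cbn [ma mb mc md];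
    f_equal; ring.
Qed.

Lemma mpow_fix_mc_parabolic n :
  Cmult (mc (mpow B n)) (fix_eig1 B z0) =
  Cmult (RtoC (INR n)) (Cmult (mc B) (Cpow (fix_eig1 B z0) n)).
Proof.
  induction n as [|n IH]; [simpl; ring|]. rewrite (mpow_fix_mc_succ B z0 HF), <- Heq.
  transitivity (Cplus (Cmult (mc B) (Cmult (Cpow (fix_eig1 B z0) n) (fix_eig1 B z0)))
                      (Cmult (fix_eig1 B z0) (Cmult (mc (mpow B n)) (fix_eig1 B z0)))); [ring|].
  rewrite IH, S_INR, RtoC_plus, Cpow_S. ring.
Qed.

End Parabolic.

(* A parabolic B fixing z0 moves O towards z0 at rate 1/n. *)
Lemma limit_set_parabolic_fix G B z0 : kleinian G -> G B -> fix_eq B z0 = RtoC 0 ->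
  fix_eig1 B z0 = fix_eig2 B z0 -> ~ psl_is_id B -> limit_set G (Some z0).
Proof.
  intros HG HB HF Heq Hnid. pose proof (kleinian_SL2 G HG B HB) as HS.
  assert (Hm1 : Cmod (fix_eig1 B z0) = 1).
  { pose proof (fix_eig_mod_mul B z0 HS HF). rewrite <- Heq in H.
    pose proof (Cmod_ge_0 (fix_eig1 B z0)). nra. }
  assert (Hc : 0 < Cmod (mc B)).
  { apply Cmod_gt_0. intro Hc0. apply Hnid, psl_is_id_of_mc_eq0 with z0; auto. }
  set (Z := 1 + Cmod z0). set (c0 := Cmod (mc B)) in *.
  assert (HZ : 1 <= Z) by (unfold Z; pose proof (Cmod_ge_0 z0); lra).
  exists (mpow B). split; [intro n; apply kleinian_mpow; auto|].
  apply conv_to_boundary_of_bound with (fun n => (2 * Z / c0 + 2 / (c0 * c0)) * / INR n).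
  2: { apply null_seq_scal, null_seq_inv. }
  exists 1%nat. intros n Hn. apply le_INR in Hn. simpl in Hn.
  set (X := mpow B n).
  assert (Hcm : Cmod (mc X) = INR n * c0).
  { pose proof (f_equal Cmod (mpow_fix_mc_parabolic B z0 HF Heq n)) as E.
    rewrite !Cmod_mult, Hm1, Cmod_R, Cmod_pow, Hm1, pow1, Rabs_pos_eq in E by apply pos_INR.
    fold X c0 in E. lra. }
  set (S := Cmod (mc X) + Cmod (md X)).
  assert (HS1 : INR n * c0 <= S) by (unfold S; pose proof (Cmod_ge_0 (md X)); lra).
  assert (Hnc : 0 < INR n * c0) by nra.
  destruct (mpow_fix_orbit_estimate B z0 HF n ltac:(fold X S; lra)) as [O1 [O2 O3]].
  fold X S Z in O1, O2, O3. rewrite Hm1, pow1, Rmult_1_r in O1.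
  assert (HI : / S <= / c0 * / INR n) by (rewrite <- Rinv_mult; apply Rinv_le_contravar; nra).
  assert (Hpos : 0 <= 2 * Z / c0 * / INR n /\ 0 <= 2 / (c0 * c0) * / INR n).
  { unfold Rdiv. split; repeat apply Rmult_le_pos; try lra;
      left; apply Rinv_0_lt_compat; nra. }
  split; [|split; auto].
  - eapply Rle_trans; [apply O1|]. unfold Rdiv in *.
    apply Rle_trans with (2 * Z * (/ c0 * / INR n)); [apply Rmult_le_compat_l; lra | nra].
  - eapply Rle_trans; [apply O3|].
    assert (HI2 : / (S * S) <= / (c0 * c0) * / INR n).
    { rewrite <- Rinv_mult. apply Rinv_le_contravar; [nra|].
      apply Rle_trans with ((INR n * c0) * (INR n * c0)); nra. }
    unfold Rdiv in *. nra.
Qed.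

Lemma kleinian_bounded_powers G B K : kleinian G -> G B ->
  (forall n, mnorm (mpow B n) <= K) -> psl_is_id B.
Proof.
  intros HG HB HK. pose proof (kleinian_SL2 G HG B HB) as HS.
  destruct (kleinian_bounded_eventually_pm G HG (mpow B) K) as [phi [ip [N HN]]]; auto.
  { intro n. apply kleinian_mpow; auto. }
  specialize (HN (S N) ltac:(lia)). pose proof (ip N).
  set (d := (phi (S N) - phi N)%nat).
  replace (phi (S N)) with (d + phi N)%nat in HN by (unfold d; lia).
  rewrite mpow_add in HN. pose proof (SL2_mpow B (phi N) HS) as HSP.
  assert (Hid : psl_is_id (mpow B d)).
  { replace (mpow B d) with (mmul (mmul (mpow B d) (mpow B (phi N))) (minv (mpow B (phi N))))
      by (rewrite <- mmul_assoc, minv_r, mmul_mid_r; auto).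
    destruct HN as [-> | ->]; [left | right]; rewrite ?mneg_mul_l, minv_r; auto. }
  destruct HG as [_ [_ Htf]]. apply (Htf B d); auto. unfold d. lia.
Qed.

Lemma mpow_fix_mc_elliptic B z0 n : fix_eq B z0 = RtoC 0 ->
  Cmult (mc (mpow B n)) (Cminus (fix_eig2 B z0) (fix_eig1 B z0)) =
  Cmult (mc B) (Cminus (Cpow (fix_eig2 B z0) n) (Cpow (fix_eig1 B z0) n)).
Proof.
  intro HF. induction n as [|n IH]; [simpl; ring|]. rewrite (mpow_fix_mc_succ B z0 HF).
  transitivity
    (Cplus (Cmult (mc B) (Cmult (Cpow (fix_eig1 B z0) n) (Cminus (fix_eig2 B z0) (fix_eig1 B z0))))
      (Cmult (fix_eig2 B z0) (Cmult (mc (mpow B n)) (Cminus (fix_eig2 B z0) (fix_eig1 B z0)))));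
    [ring|].
  rewrite IH, !Cpow_S. ring.
Qed.

Lemma mpow_bounded_elliptic B z0 : SL2 B -> fix_eq B z0 = RtoC 0 ->
  fix_eig1 B z0 <> fix_eig2 B z0 -> Cmod (fix_eig1 B z0) = 1 ->
  exists K, forall n, mnorm (mpow B n) <= K.
Proof.
  intros HS HF Hne Hm1. pose proof (fix_eig_mod_mul B z0 HS HF) as Hm2.
  rewrite Hm1, Rmult_1_l in Hm2.
  assert (Hd : 0 < Cmod (Cminus (fix_eig2 B z0) (fix_eig1 B z0))).
  { apply Cmod_gt_0. intro E. apply Hne. symmetry. apply Cminus_eq0. auto. }
  set (Cc := 2 * Cmod (mc B) / Cmod (Cminus (fix_eig2 B z0) (fix_eig1 B z0))).
  eexists. intro n.
  apply (mnorm_mpow_fix_le B z0 HF n Cc);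
    [| rewrite Cmod_pow, Hm1, pow1; lra | rewrite Cmod_pow, Hm2, pow1; lra].
  pose proof (f_equal Cmod (mpow_fix_mc_elliptic B z0 n HF)) as E. rewrite !Cmod_mult in E.
  assert (Cmod (Cminus (Cpow (fix_eig2 B z0) n) (Cpow (fix_eig1 B z0) n)) <= 2).
  { unfold Cminus. eapply Rle_trans; [apply Cmod_triangle|].
    rewrite Cmod_opp, !Cmod_pow, Hm1, Hm2, pow1. lra. }
  unfold Cc, Rdiv. apply Rmult_le_reg_r with (Cmod (Cminus (fix_eig2 B z0) (fix_eig1 B z0))); auto.
  rewrite Rmult_assoc, Rinv_l, Rmult_1_r by lra. rewrite E.
  pose proof (Cmod_ge_0 (mc B)). nra.
Qed.

Lemma limit_set_fixed_point G B z0 : kleinian G -> G B -> fix_eq B z0 = RtoC 0 ->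
  ~ psl_is_id B -> limit_set G (Some z0).
Proof.
  intros HG HB HF Hnid. pose proof (kleinian_SL2 G HG B HB) as HS.
  destruct (Rtotal_order (Cmod (fix_eig1 B z0)) 1) as [h|[h|h]].
  - apply (limit_set_attracting_fix G B z0); auto.
  - destruct (classic (fix_eig1 B z0 = fix_eig2 B z0)) as [e|e].
    + apply (limit_set_parabolic_fix G B z0); auto.
    + destruct (mpow_bounded_elliptic B z0 HS HF e h) as [K HK].
      contradict Hnid. apply (kleinian_bounded_powers G B K); auto.
  - apply (limit_set_attracting_fix G (minv B) z0); [auto | apply kleinian_minv; auto | |].
    + transitivity (Copp (fix_eq B z0)); [|rewrite HF; ring].
      destruct B as [a b c d]; unfold fix_eq, minv; cbn [ma mb mc md]; ring.
    + replace (fix_eig1 (minv B) z0) with (fix_eig2 B z0)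
        by (destruct B as [a b c d]; unfold fix_eig1, fix_eig2, minv; cbn [ma mb mc md]; ring).
      pose proof (fix_eig_mod_mul B z0 HS HF). pose proof (Cmod_ge_0 (fix_eig2 B z0)). nra.
Qed.

(** * Zooming in on a point of the sphere *)

(* [zoom z0 s] acts on C as w |-> (w - zoom_center z0 s) / s^2; it is the identity for
   s = 1 and blows up a shrinking neighbourhood of z0 as s -> 0. *)
Definition zoom_center (z0 : C) (s : R) : C := Cmult (RtoC (1 - s)) z0.
Definition zoom (z0 : C) (s : R) : M2 :=
  mkM2 (Cinv (RtoC s)) (Copp (Cmult (zoom_center z0 s) (Cinv (RtoC s)))) (RtoC 0) (RtoC s).

Lemma SL2_zoom z0 s : s <> 0 -> SL2 (zoom z0 s).
Proof. intro H. apply RtoC_neq0 in H. unfold SL2, mdet, zoom; simpl. field. auto. Qed.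

Lemma zoom1 z0 : zoom z0 1 = mid.
Proof.
  unfold zoom, zoom_center, mid. replace (1 - 1) with 0 by ring.
  rewrite <- RtoC_inv by lra. rewrite Rinv_1. f_equal; ring.
Qed.

Lemma zoom_center_le z0 s : 0 < s <= 1 -> Cmod (zoom_center z0 s) <= Cmod z0.
Proof.
  intro H. unfold zoom_center. rewrite Cmod_mult, Cmod_R, Rabs_pos_eq by lra.
  pose proof (Cmod_ge_0 z0). nra.
Qed.

Lemma zoom_center_dist z0 s : 0 <= s -> Cmod (Cminus (zoom_center z0 s) z0) = s * Cmod z0.
Proof.
  intro H. unfold zoom_center.
  replace (Cminus (Cmult (RtoC (1 - s)) z0) z0) with (Cmult (RtoC (- s)) z0)
    by (rewrite RtoC_minus, RtoC_opp; ring).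
  rewrite Cmod_mult, Cmod_R, Rabs_Ropp, Rabs_pos_eq; auto.
Qed.

(* The upper-right entry of the zoomed conjugate measures how far g is from fixing the
   zoom centre. *)
Lemma zoom_conj_entries z0 s g : s <> 0 ->
  let A := mconj (zoom z0 s) g in let v := zoom_center z0 s in
  ma g = Cplus (Cmult v (mc g)) (ma A) /\
  md g = Cminus (md A) (Cmult (mc g) v) /\
  Cmult (mb A) (Cmult (RtoC s) (RtoC s)) = fix_eq g v.
Proof.
  intro H. apply RtoC_neq0 in H. destruct g as [a b c d].
  unfold mconj, zoom, minv, mmul, fix_eq; simpl. repeat split; field; auto.
Qed.

Lemma zoom_conj_mb z0 s g : s <> 0 ->
  mb g = Cplus (Cminus (Cmult (zoom_center z0 s) (md g))
                       (Cmult (zoom_center z0 s) (ma (mconj (zoom z0 s) g))))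
               (Cmult (mb (mconj (zoom z0 s) g)) (Cmult (RtoC s) (RtoC s))).
Proof.
  intro H. destruct (zoom_conj_entries z0 s g H) as [E1 [E3 E4]]. cbv zeta in *.
  rewrite E4. unfold fix_eq. rewrite E1. ring.
Qed.

Lemma Rinv_sub_le a s : 0 < s -> s / 2 <= a -> Rabs (/ a - / s) <= 2 / (s * s) * Rabs (a - s).
Proof.
  intros Hs Ha. replace (/ a - / s) with ((s - a) / (a * s)) by (field; lra).
  unfold Rdiv. rewrite Rabs_mult, Rabs_inv. rewrite Rabs_minus_sym.
  rewrite (Rabs_pos_eq (a * s)) by nra. rewrite Rmult_comm.
  apply Rmult_le_compat_r; [apply Rabs_pos|].
  apply Rmult_le_reg_l with (a * s); [nra|]. rewrite Rinv_r by nra.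
  replace (a * s * (2 * / (s * s))) with (2 * a / s) by (field; lra).
  apply Rmult_le_reg_l with s; auto. replace (s * (2 * a / s)) with (2 * a) by (field; lra). lra.
Qed.

Lemma mnorm_zoom_sub z0 a b : a <> 0 -> b <> 0 ->
  mnorm (msub (zoom z0 a) (zoom z0 b)) = Rabs (/ a - / b) * (1 + Cmod z0) + Rabs (a - b).
Proof.
  intros Ha Hb. unfold mnorm, msub, zoom; cbn [ma mb mc md].
  rewrite <- !RtoC_inv by auto. rewrite <- !RtoC_minus, !Cmod_R.
  replace (Cminus (Copp (Cmult (zoom_center z0 a) (RtoC (/ a))))
                  (Copp (Cmult (zoom_center z0 b) (RtoC (/ b)))))
    with (Cmult (RtoC (/ b - / a)) z0).
  2: { unfold zoom_center. rewrite !RtoC_minus, !RtoC_inv by auto.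
       field. split; apply RtoC_neq0; auto. }
  rewrite Cmod_mult, Cmod_R, Rminus_diag, Rabs_R0, (Rabs_minus_sym (/ b)). ring.
Qed.

Lemma mconv_zoom z0 u s : 0 < s -> null_seq (fun n => u n - s) ->
  mconv (fun n => zoom z0 (u n)) (zoom z0 s).
Proof.
  intros Hs Hu.
  apply null_seq_le_eventually with (fun n => (2 / (s * s) * (1 + Cmod z0) + 1) * Rabs (u n - s)).
  - destruct (Hu (s / 2) ltac:(lra)) as [N HN]. exists N. intros n Hn. specialize (HN n Hn).
    apply Rabs_def2 in HN. rewrite Rabs_pos_eq by apply mnorm_ge0.
    rewrite mnorm_zoom_sub by lra. pose proof (Rinv_sub_le (u n) s Hs ltac:(lra)).
    pose proof (Cmod_ge_0 z0). pose proof (Rabs_pos (u n - s)).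
    pose proof (Rmult_le_compat_r (1 + Cmod z0) _ _ ltac:(lra) H). nra.
  - apply null_seq_scal, null_seq_abs; auto.
Qed.

Lemma mconv_mconj P Q X A : mconv P Q -> mconv X A ->
  mconv (fun n => mconj (P n) (X n)) (mconj Q A).
Proof. intros HP HX. apply mconv_mul; [apply mconv_mul | apply mconv_minv]; auto. Qed.

Section ZoomEstimates.

Variables (z0 : C) (t : R) (g : M2) (K : R).
Hypothesis Ht : 0 < t <= 1.
Hypothesis HK : mnorm (mconj (zoom z0 t) g) <= K.

Let A := mconj (zoom z0 t) g.
Let v := zoom_center z0 t.

Lemma zoom_orbit_estimate : 0 < Cmod (mc g) + Cmod (md g) ->
  let S := Cmod (mc g) + Cmod (md g) in
  Cmod (Cminus (fst (act g Opt)) z0) <= 2 * ((2 + Cmod z0) * K) / S + t * Cmod z0 /\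
  0 <= snd (act g Opt) <= 2 / (S * S).
Proof.
  intros HS S. destruct (zoom_conj_entries z0 t g ltac:(lra)) as [E1 _]. fold A v in E1.
  pose proof (zoom_conj_mb z0 t g ltac:(lra)) as E2. fold A v in E2.
  destruct (orbit_point_estimate g v HS) as [O1 O2]. split; auto.
  destruct (Cmod_entries_le_mnorm A) as [Ba [Bb _]]. fold A in HK.
  assert (Hv : Cmod v <= Cmod z0) by (apply zoom_center_le; auto).
  assert (Hb : Cmod (Cmult (mb A) (Cmult (RtoC t) (RtoC t))) <= K).
  { rewrite !Cmod_mult, Cmod_R, Rabs_pos_eq by lra. pose proof (Cmod_ge_0 (mb A)).
    assert (0 <= t * t <= 1) by nra. nra. }
  assert (Hnum : Cmod (Cminus (ma g) (Cmult v (mc g))) + Cmod (Cminus (mb g) (Cmult v (md g)))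
                 <= (2 + Cmod z0) * K).
  { rewrite E1, E2.
    replace (Cminus (Cplus (Cmult v (mc g)) (ma A)) (Cmult v (mc g))) with (ma A) by ring.
    replace (Cminus (Cplus (Cminus (Cmult v (md g)) (Cmult v (ma A)))
                           (Cmult (mb A) (Cmult (RtoC t) (RtoC t)))) (Cmult v (md g)))
      with (Cplus (Copp (Cmult v (ma A))) (Cmult (mb A) (Cmult (RtoC t) (RtoC t)))) by ring.
    eapply Rle_trans; [apply Rplus_le_compat_l, Cmod_triangle|].
    rewrite Cmod_opp, Cmod_mult. pose proof (Cmod_ge_0 v). pose proof (Cmod_ge_0 (ma A)). nra. }
  replace (Cminus (fst (act g Opt)) z0)
    with (Cplus (Cminus (fst (act g Opt)) v) (Cminus v z0)) by ring.
  eapply Rle_trans; [apply Cmod_triangle|]. unfold v. rewrite zoom_center_dist by lra. fold v.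
  apply Rplus_le_compat_r. eapply Rle_trans; [apply O1|].
  unfold Rdiv. apply Rmult_le_compat_r; [left; apply Rinv_0_lt_compat; auto | lra].
Qed.

Lemma zoom_preimage_mnorm_le M : Cmod (mc g) <= M ->
  mnorm g <= (K + M * Cmod z0) + (K + Cmod z0 * K + Cmod z0 * (K + M * Cmod z0)) + M
             + (K + M * Cmod z0).
Proof.
  intros HM. destruct (zoom_conj_entries z0 t g ltac:(lra)) as [E1 [E3 _]].
  pose proof (zoom_conj_mb z0 t g ltac:(lra)) as E2. fold A v in E1, E2, E3.
  destruct (Cmod_entries_le_mnorm A) as [Ba [Bb [_ Bd]]]. fold A in HK.
  assert (Hv : Cmod v <= Cmod z0) by (apply zoom_center_le; auto).
  pose proof (Cmod_ge_0 v) as Pv. pose proof (Cmod_ge_0 (mc g)) as Pc.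
  assert (Ha : Cmod (ma g) <= K + M * Cmod z0).
  { rewrite E1. eapply Rle_trans; [apply Cmod_triangle|]. rewrite Cmod_mult.
    pose proof (Rmult_le_compat _ _ _ _ Pv Pc Hv HM). lra. }
  assert (Hd : Cmod (md g) <= K + M * Cmod z0).
  { rewrite E3. unfold Cminus. eapply Rle_trans; [apply Cmod_triangle|].
    rewrite Cmod_opp, Cmod_mult. pose proof (Rmult_le_compat _ _ _ _ Pc Pv HM Hv). lra. }
  assert (Hb : Cmod (mb g) <= K + Cmod z0 * K + Cmod z0 * (K + M * Cmod z0)).
  { rewrite E2. eapply Rle_trans; [apply Cmod_triangle|]. unfold Cminus.
    eapply Rle_trans; [apply Rplus_le_compat_r, Cmod_triangle|].
    rewrite Cmod_opp, !Cmod_mult, Cmod_R, Rabs_pos_eq by lra.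
    pose proof (Cmod_ge_0 (md g)). pose proof (Cmod_ge_0 (ma A)). pose proof (Cmod_ge_0 (mb A)).
    pose proof (Rmult_le_compat _ _ _ _ Pv H Hv Hd).
    assert (Cmod (ma A) <= K) by lra. pose proof (Rmult_le_compat _ _ _ _ Pv H0 Hv H3).
    assert (0 <= t * t <= 1) by nra. assert (Cmod (mb A) * (t * t) <= K) by nra. lra. }
  unfold mnorm. lra.
Qed.

End ZoomEstimates.

(* Bounded zoomed conjugates of B force B to fix z0 up to an error O(t). *)
Lemma fix_eq_le_zoom z0 t B : 0 < t <= 1 ->
  Cmod (fix_eq B z0) <= t * (Cmod (mb (mconj (zoom z0 t) B)) +
    Cmod z0 * (Cmod (ma B) + 2 * Cmod (mc B) * Cmod z0 + Cmod (md B))).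
Proof.
  intro Ht. destruct (zoom_conj_entries z0 t B ltac:(lra)) as [_ [_ E4]]. cbv zeta in E4.
  set (v := zoom_center z0 t) in *.
  assert (Ediff : Cminus (fix_eq B v) (fix_eq B z0) =
    Cmult (Cminus v z0) (Cminus (Cminus (ma B) (Cmult (mc B) (Cplus v z0))) (md B)))
    by (unfold fix_eq; ring).
  assert (Hv : Cmod v <= Cmod z0) by (apply zoom_center_le; auto).
  assert (H1 : Cmod (fix_eq B v) <= t * Cmod (mb (mconj (zoom z0 t) B))).
  { rewrite <- E4, !Cmod_mult, Cmod_R, Rabs_pos_eq by lra.
    pose proof (Cmod_ge_0 (mb (mconj (zoom z0 t) B))). assert (t * t <= t) by nra. nra. }
  assert (H2 : Cmod (Cminus (Cminus (ma B) (Cmult (mc B) (Cplus v z0))) (md B)) <=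
               Cmod (ma B) + 2 * Cmod (mc B) * Cmod z0 + Cmod (md B)).
  { unfold Cminus. eapply Rle_trans; [apply Cmod_triangle|]. rewrite Cmod_opp.
    eapply Rle_trans; [apply Rplus_le_compat_r, Cmod_triangle|]. rewrite Cmod_opp, Cmod_mult.
    pose proof (Cmod_triangle v z0). pose proof (Cmod_ge_0 (mc B)). nra. }
  replace (fix_eq B z0) with (Cminus (fix_eq B v) (Cminus (fix_eq B v) (fix_eq B z0))) by ring.
  unfold Cminus at 1. eapply Rle_trans; [apply Cmod_triangle|].
  rewrite Cmod_opp, Ediff, Cmod_mult. unfold v. rewrite zoom_center_dist by lra. fold v.
  pose proof (Cmod_ge_0 z0).
  assert (t * Cmod z0 * Cmod (Cminus (Cminus (ma B) (Cmult (mc B) (Cplus v z0))) (md B)) <=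
          t * Cmod z0 * (Cmod (ma B) + 2 * Cmod (mc B) * Cmod z0 + Cmod (md B)))
    by (apply Rmult_le_compat_l; nra).
  lra.
Qed.

Lemma null_seq_bound_eq0 x s C : 0 <= x -> null_seq s ->
  (exists N, forall k, (N <= k)%nat -> x <= s k * C) -> x = 0.
Proof.
  intros Hx Hs [N HN]. destruct Hx as [Hx|]; auto. exfalso. pose proof (Rabs_pos C).
  destruct (Hs (x / (Rabs C + 1))) as [N' HN']; [apply Rdiv_lt_0_compat; lra|].
  specialize (HN (max N N') ltac:(lia)). specialize (HN' (max N N') ltac:(lia)).
  set (y := s (max N N')) in *. pose proof (Rabs_pos y).
  assert (Hy : Rabs y * (Rabs C + 1) < x).
  { apply Rmult_lt_reg_r with (/ (Rabs C + 1)); [apply Rinv_0_lt_compat; lra|].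
    rewrite Rmult_assoc, Rinv_r, Rmult_1_r by lra. auto. }
  assert (y * C <= Rabs y * Rabs C) by (rewrite <- Rabs_mult; apply Rle_abs). nra.
Qed.

Lemma unbounded_subseq (u : nat -> R) : ~ (exists M, forall k, u k <= M) ->
  exists kk : nat -> nat, forall j, (j <= kk j)%nat /\ INR j + 1 < u (kk j).
Proof.
  intro Hn.
  assert (sel : forall j : nat, exists k, (j <= k)%nat /\ INR j + 1 < u k).
  { intro j. apply NNPP. intro H. apply Hn.
    destruct (Rabs_le_prefix u j) as [K0 HK0]. exists (Rmax (INR j + 1) K0). intro k.
    destruct (Compare_dec.le_lt_dec j k).
    - apply Rle_trans with (INR j + 1); [|apply Rmax_l].
      apply Rnot_lt_le. intro. apply H. exists k. auto.
    - eapply Rle_trans; [apply Rle_abs | eapply Rle_trans; [apply HK0; auto | apply Rmax_r]]. }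
  exists (fun j => proj1_sig (constructive_indefinite_description _ (sel j))).
  intro j. destruct constructive_indefinite_description. auto.
Qed.

Section ZoomLimit.

Variables (G : M2 -> Prop) (z0 : C) (s : nat -> R) (g : nat -> M2) (A : M2).
Hypothesis HG : kleinian G.
Hypothesis HnL : ~ limit_set G (Some z0).
Hypothesis Hs : forall k, 0 < s k <= 1.
Hypothesis Hs0 : null_seq s.
Hypothesis Hg : forall k, G (g k).
Hypothesis HA : mconv (fun k => mconj (zoom z0 (s k)) (g k)) A.

(* Otherwise the orbit points g k . O accumulate at z0. *)
Lemma zoom_limit_mc_bounded : exists M, forall k, Cmod (mc (g k)) <= M.
Proof.
  apply NNPP. intro Hub. apply HnL.
  destruct (unbounded_subseq (fun k => Cmod (mc (g k))) Hub) as [kk Hkk].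
  destruct (mconv_bounded _ _ HA) as [KA HKA].
  set (Z := Cmod z0). assert (HZ : 0 <= Z) by apply Cmod_ge_0.
  set (K1 := 2 * ((2 + Z) * KA)).
  exists (fun j => g (kk j)). split; [intro; auto|].
  apply conv_to_boundary_of_bound
    with (fun j => K1 * / (INR j + 1) + s (kk j) * Z + 2 * / (INR j + 1)).
  2: { repeat apply null_seq_plus; try (apply null_seq_scal, null_seq_inv_succ).
       apply null_seq_le with (fun j => Z * s (kk j)).
       - intro n. pose proof (Hs (kk n)). rewrite Rabs_pos_eq by nra. lra.
       - apply null_seq_scal, null_seq_subseq; auto. intro n; apply Hkk. }
  exists O. intros j _. destruct (Hkk j) as [_ Hc].
  set (k := kk j) in *. pose proof (pos_INR j). pose proof (Cmod_ge_0 (md (g k))).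
  assert (HS : INR j + 1 < Cmod (mc (g k)) + Cmod (md (g k))) by lra.
  destruct (zoom_orbit_estimate z0 (s k) (g k) KA (Hs k) (HKA k) ltac:(lra)) as [O1 [O2 O3]].
  fold Z in O1. set (S := Cmod (mc (g k)) + Cmod (md (g k))) in *.
  assert (HSi : / S <= / (INR j + 1)) by (apply Rinv_le_contravar; lra).
  assert (0 <= KA)
    by (pose proof (mnorm_ge0 (mconj (zoom z0 (s k)) (g k))); specialize (HKA k); lra).
  assert (0 <= K1 * / (INR j + 1))
    by (unfold K1; apply Rmult_le_pos; [nra | left; apply Rinv_0_lt_compat; lra]).
  assert (0 <= s k * Z) by (pose proof (Hs k); nra).
  assert (0 < / (INR j + 1)) by (apply Rinv_0_lt_compat; lra).
  split; [|split; auto].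
  - eapply Rle_trans; [apply O1|]. unfold Rdiv.
    assert (K1 * / S <= K1 * / (INR j + 1)) by (apply Rmult_le_compat_l; unfold K1; nra).
    unfold K1 in *. lra.
  - eapply Rle_trans; [apply O3|]. unfold Rdiv.
    assert (/ (S * S) <= / (INR j + 1)) by (apply Rinv_le_contravar; nra). lra.
Qed.

(* With bounded lower-left entries the g k are bounded, hence eventually +-B along a
   subsequence; the zoomed conjugates of B stay bounded only if B fixes z0. *)
Lemma zoom_limit_psl_id : psl_is_id A.
Proof.
  destruct zoom_limit_mc_bounded as [M HM].
  destruct (mconv_bounded _ _ HA) as [KA HKA].
  destruct (kleinian_bounded_eventually_pm G HG g _ Hg
              (fun k => zoom_preimage_mnorm_le z0 (s k) (g k) KA (Hs k) (HKA k) M (HM k)))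
    as [phi [ip [N HN]]].
  set (B := g (phi N)) in *.
  assert (Aphi : mconv (fun k => mconj (zoom z0 (s (phi k))) (g (phi k))) A).
  { apply (mconv_subseq (fun k => mconj (zoom z0 (s k)) (g k)) A phi); auto.
    apply strictly_increasing_ge; auto. }
  destruct (classic (psl_is_id B)) as [HB|HB].
  - apply (mconv_eventually_pm _ A mid N Aphi). intros k Hk.
    assert (HP : SL2 (zoom z0 (s (phi k)))) by (apply SL2_zoom; pose proof (Hs (phi k)); lra).
    destruct (HN k Hk) as [-> | ->]; destruct HB as [-> | ->];
      rewrite ?mconj_mneg, mconj_mid, ?mnegK; auto.
  - exfalso. apply HnL, (limit_set_fixed_point G B z0); [auto | apply Hg | | auto].
    set (KB := Cmod (ma B) + 2 * Cmod (mc B) * Cmod z0 + Cmod (md B)).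
    apply Cmod_eq_0, (null_seq_bound_eq0 _ (fun k => s (phi k)) (KA + Cmod z0 * KB));
      [apply Cmod_ge_0 | apply null_seq_subseq; auto; apply strictly_increasing_ge; auto|].
    exists N. intros k Hk. pose proof (Hs (phi k)) as Ht.
    eapply Rle_trans; [apply fix_eq_le_zoom; auto|]. apply Rmult_le_compat_l; [lra|].
    apply Rplus_le_compat_r. specialize (HKA (phi k)).
    destruct (Cmod_entries_le_mnorm (mconj (zoom z0 (s (phi k))) (g (phi k)))) as [_ [Hb _]].
    destruct (HN k Hk) as [E | E]; rewrite E in Hb, HKA; [lra|].
    rewrite mconj_mneg, mnorm_mneg in Hb, HKA. cbn [mb mneg] in Hb. rewrite Cmod_opp in Hb. lra.
Qed.

End ZoomLimit.

(** * The path of zoomed groups *)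

Definition zoom_path (G : M2 -> Prop) (z0 : C) (s : R) (A : M2) : Prop :=
  (s <= 0 /\ psl_is_id A) \/ (0 < s /\ conj_group (zoom z0 s) G A).

Section ZoomPath.

Variables (G : M2 -> Prop) (z0 : C).
Hypothesis HG : kleinian G.

Lemma zoom_path_mneg s A : zoom_path G z0 s A -> zoom_path G z0 s (mneg A).
Proof.
  intros [[Hs [-> | ->]] | [Hs [g [Gg ->]]]].
  - left. split; auto. right. auto.
  - left. split; auto. left. apply mnegK.
  - right. split; auto. exists (mneg g).
    split; [apply kleinian_mneg; auto | symmetry; apply mconj_mneg].
Qed.

Lemma zoom_path_mid s : zoom_path G z0 s mid.
Proof.
  destruct (Rle_dec s 0); [left; split; [|left]; auto|].
  right. split; [lra|]. exists mid. split; [apply kleinian_mid; auto|].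
  rewrite mconj_mid; auto. apply SL2_zoom. lra.
Qed.

Lemma kleinian_zoom_path s : kleinian (zoom_path G z0 s).
Proof.
  destruct (Rle_dec s 0).
  - apply (kleinian_ext trivial_group); [|apply kleinian_trivial_group].
    intro A. unfold zoom_path, trivial_group. split; [intro; left; auto|].
    intros [[_ H] | [h _]]; [auto | lra].
  - apply (kleinian_ext (conj_group (zoom z0 s) G));
      [|apply kleinian_conj_group; auto; apply SL2_zoom; lra].
    intro A. unfold zoom_path. split; [intro; right; split; auto; lra|].
    intros [[h _] | [_ H]]; [lra | auto].
Qed.

Lemma zoom_path1 A : zoom_path G z0 1 A <-> G A.
Proof.
  assert (E : forall g, mconj (zoom z0 1) g = g)
    by (intro; rewrite zoom1; unfold mconj; rewrite minv_mid, mmul_mid_l, mmul_mid_r; auto).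
  split.
  - intros [[h _] | [_ [g [Gg ->]]]]; [lra | rewrite E; auto].
  - intro HA. right. split; [lra|]. exists A. rewrite E. auto.
Qed.

(* At time t <= 0 the elements +-I are written as zoomed conjugates at the time r > 0. *)
Lemma zoom_path_repr t r A : 0 <= t <= 1 -> 0 < r <= 1 -> zoom_path G z0 t A ->
  exists p : R * M2, (0 < fst p <= 1 /\ fst p <= t + r /\ (0 < t -> fst p = t)) /\
    G (snd p) /\ A = mconj (zoom z0 (fst p)) (snd p).
Proof.
  intros Ht Hr [[h1 h2] | [h1 [h [Gh E]]]].
  - exists (r, A). cbn [fst snd]. split; [repeat split; lra|].
    assert (HP : SL2 (zoom z0 r)) by (apply SL2_zoom; lra).
    destruct h2 as [-> | ->]; split;
      [apply kleinian_mid | rewrite mconj_mid | apply kleinian_mneg, kleinian_mid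
      | rewrite mconj_mneg, mconj_mid]; auto.
  - exists (t, h). cbn [fst snd]. split; [repeat split; lra | auto].
Qed.

Lemma zoom_path_conv_repr (v : nat -> R) psi A :
  (forall k, 0 <= v k <= 1) -> (forall k, zoom_path G z0 (v k) (psi k)) -> psl_conv psi A ->
  exists (t : nat -> R) (h : nat -> M2),
    (forall k, 0 < t k <= 1 /\ t k <= v k + / (INR k + 1) /\ (0 < v k -> t k = v k)) /\
    (forall k, G (h k)) /\ mconv (fun k => mconj (zoom z0 (t k)) (h k)) A.
Proof.
  intros Hv Hpsi Hc. destruct (psl_conv_lift psi A Hc) as [psi' [Hpm Hc']].
  assert (ch : forall k, exists p : R * M2,
    (0 < fst p <= 1 /\ fst p <= v k + / (INR k + 1) /\ (0 < v k -> fst p = v k)) /\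
    G (snd p) /\ psi' k = mconj (zoom z0 (fst p)) (snd p)).
  { intro k. pose proof (pos_INR k). apply zoom_path_repr; auto.
    - split; [apply Rinv_0_lt_compat; lra|].
      rewrite <- Rinv_1. apply Rinv_le_contravar; lra.
    - destruct (Hpm k) as [-> | ->]; [|apply zoom_path_mneg]; auto. }
  set (p := fun k => proj1_sig (constructive_indefinite_description _ (ch k))).
  assert (Hp : forall k, (0 < fst (p k) <= 1 /\ fst (p k) <= v k + / (INR k + 1) /\
                          (0 < v k -> fst (p k) = v k)) /\
                         G (snd (p k)) /\ psi' k = mconj (zoom z0 (fst (p k))) (snd (p k)))
    by (intro k; exact (proj2_sig (constructive_indefinite_description _ (ch k)))).
  exists (fun k => fst (p k)), (fun k => snd (p k)). split; [|split].
  - intro k. apply Hp.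
  - intro k. apply Hp.
  - apply (mconv_eventually_eq _ psi'); auto. exists O. intros k _. symmetry. apply Hp.
Qed.

Lemma zoom_path_geom_conv_pos s u : 0 < s -> (forall n, 0 <= u n <= 1) -> is_lim_seq u s ->
  geom_conv (fun n => zoom_path G z0 (u n)) (zoom_path G z0 s).
Proof.
  intros Hs Hu Hl. apply is_lim_seq_null_seq in Hl.
  destruct (Hl (s / 2) ltac:(lra)) as [N HN].
  split.
  - intros phi psi A Hphi Hpsi Hc.
    destruct (zoom_path_conv_repr (fun k => u (phi k)) psi A) as [t [h [Ht [Gh HA]]]]; auto.
    assert (Hphi' : forall k, (k <= phi k)%nat) by (apply strictly_increasing_ge; exact Hphi).
    assert (Htu : forall k, (N <= k)%nat -> t k = u (phi k)).
    { intros k Hk. apply Ht. specialize (HN (phi k) ltac:(specialize (Hphi' k); lia)).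
      apply Rabs_def2 in HN. lra. }
    assert (Hts : null_seq (fun k => t k - s)).
    { apply null_seq_le_eventually with (fun k => Rabs (u (phi k) - s)).
      - exists N. intros k Hk. rewrite Htu by auto. lra.
      - apply null_seq_abs, (null_seq_subseq (fun n => u n - s) phi); auto. }
    set (B := mconj (minv (zoom z0 s)) A).
    assert (HB : mconv h B).
    { apply (mconv_eventually_eq _ (fun k => mconj (minv (zoom z0 (t k)))
                                              (mconj (zoom z0 (t k)) (h k)))).
      - exists O. intros k _. rewrite mconjK; auto. apply SL2_zoom. specialize (Ht k). lra.
      - apply mconv_mconj; auto. apply mconv_minv, mconv_zoom; auto. }
    right. split; auto. exists B. split; [apply (kleinian_mconv_closed G HG h B); auto|].
    unfold B. rewrite <- (minvK (zoom z0 s)) at 1. rewrite mconjK; auto.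
    apply SL2_minv, SL2_zoom. lra.
  - intros A [[h1 _] | [_ [g [Gg ->]]]]; [lra|].
    exists (fun n => if Rlt_dec 0 (u n) then mconj (zoom z0 (u n)) g else mid). split.
    + intro n. destruct Rlt_dec; [|apply zoom_path_mid].
      right. split; auto. exists g. auto.
    + apply mconv_psl_conv, (mconv_eventually_eq _ (fun n => mconj (zoom z0 (u n)) g)).
      * exists N. intros n Hn. specialize (HN n Hn). apply Rabs_def2 in HN.
        destruct Rlt_dec; [auto | lra].
      * apply mconv_mconj; [apply mconv_zoom | apply mconv_const]; auto.
Qed.

Lemma zoom_path_geom_conv_zero u : ~ limit_set G (Some z0) -> (forall n, 0 <= u n <= 1) ->
  is_lim_seq u 0 -> geom_conv (fun n => zoom_path G z0 (u n)) (zoom_path G z0 0).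
Proof.
  intros HnL Hu Hl. apply is_lim_seq_null_seq in Hl. split.
  - intros phi psi A Hphi Hpsi Hc. left. split; [lra|].
    destruct (zoom_path_conv_repr (fun k => u (phi k)) psi A) as [t [h [Ht [Gh HA]]]]; auto.
    apply (zoom_limit_psl_id G z0 t h A); auto; [intro k; apply Ht|].
    apply null_seq_le with (fun k => Rabs (u (phi k) - 0) + / (INR k + 1)).
    + intro k. destruct (Ht k) as [h1 [h2 _]]. rewrite Rabs_pos_eq by lra.
      rewrite Rminus_0_r. pose proof (Rle_abs (u (phi k))). lra.
    + apply null_seq_plus; [|apply null_seq_inv_succ].
      apply null_seq_abs, (null_seq_subseq (fun n => u n - 0) phi); auto.
      apply strictly_increasing_ge. exact Hphi.
  - intros A [[_ HA] | [h _]]; [|lra]. exists (fun _ => mid). split; [intro; apply zoom_path_mid|].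
    apply (is_lim_seq_ext (fun _ => 0)); [|apply is_lim_seq_const].
    intro n. symmetry. apply psl_dist_pm.
    destruct HA as [-> | ->]; [auto | right; rewrite mnegK; auto].
Qed.

End ZoomPath.

(* If every finite point is a limit point, then so is infinity, since the limit set is
   closed: pick h_n in G with h_n . O within 1 of n + 1. *)
Lemma domain_nonempty_finite G : domain_nonempty G -> exists z0, ~ limit_set G (Some z0).
Proof.
  intros [xi Hxi]. destruct xi as [z0|]; eauto.
  apply NNPP. intro H. apply Hxi.
  assert (Hall : forall z, limit_set G (Some z)).
  { intro z. apply NNPP. intro H'. apply H. eauto. }
  assert (ch : forall n : nat, exists h, G h /\ INR n < Cmod (fst (act h Opt))).
  { intro n. destruct (Hall (RtoC (INR n + 1))) as [g [Gg [Hc _]]].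
    apply is_lim_seq_null_seq in Hc. destruct (Hc 1 ltac:(lra)) as [N HN].
    specialize (HN N (le_n N)). exists (g N). split; auto.
    rewrite Rminus_0_r, Rabs_pos_eq in HN by apply Cmod_ge_0.
    set (w := fst (act (g N) Opt)) in *.
    pose proof (Cmod_triangle (Copp (Cminus w (RtoC (INR n + 1)))) w).
    replace (Cplus (Copp (Cminus w (RtoC (INR n + 1)))) w) with (RtoC (INR n + 1)) in H0 by ring.
    rewrite Cmod_opp, Cmod_R, Rabs_pos_eq in H0 by (pose proof (pos_INR n); lra). lra. }
  set (hh := fun n => proj1_sig (constructive_indefinite_description _ (ch n))).
  assert (Hhh : forall n, G (hh n) /\ INR n < Cmod (fst (act (hh n) Opt)))
    by (intro n; exact (proj2_sig (constructive_indefinite_description _ (ch n)))).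
  exists hh. split; [intro; apply Hhh|]. unfold conv_to_boundary; cbv beta iota.
  apply (is_lim_seq_le_p_loc INR); [|apply is_lim_seq_INR].
  exists 1%nat. intros n Hn. destruct (Hhh n) as [_ H1]. apply le_INR in Hn. simpl in Hn.
  set (x := Cmod (fst (act (hh n) Opt))) in *.
  pose proof (pow2_ge_0 (snd (act (hh n) Opt))). assert (x <= x ^ 2) by nra. lra.
Qed.

Theorem mainTheorem6 : forall G : M2 -> Prop,
  kleinian G -> domain_nonempty G -> in_trivial_path_component G.
Proof.
  intros G HG Hd. destruct (domain_nonempty_finite G Hd) as [z0 Hz0].
  exists (zoom_path G z0). split; [|split; [|split]].
  - intros s _. apply kleinian_zoom_path; auto.
  - intro A. unfold zoom_path, trivial_group. split; [intros [[_ H] | [h _]]; [auto | lra]|].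
    intro; left; split; auto; lra.
  - apply zoom_path1; auto.
  - intros s u Hs Hu Hl. destruct (proj1 Hs) as [Hpos | <-].
    + apply zoom_path_geom_conv_pos; auto.
    + apply zoom_path_geom_conv_zero; auto.
Qed.
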